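(* Let $d\ge 1$, let $x_1<x_2$ be real numbers and $x_0\in[x_1,x_2]$. Let $p,q,r_1,\dots,r_d$ be continuous complex-valued functions on $[x_1,x_2]$, with $p$ continuously differentiable and $p(x)\neq 0$ for all $x$, and let $Ly=(py')'+qy$. Let $u_0$ be a nonvanishing solution of $Lu_0=0$ on $[x_1,x_2]$, and let $\tilde X^{(\mathbf j)}$, $X^{(\mathbf m+\frac1d\mathbf 1)}$ be the formal powers defined in the context. For $\vec\lambda=(\lambda_1,\dots,\lambda_d)\in\mathbb C^d$ define $$u_1=u_0\sum_{\mathbf n\in\mathbb Z_{\ge0}^d}\frac{1}{(2|\mathbf n|)!}\tilde X^{(2\mathbf n)}\lambda^{\mathbf n},\qquad u_2=u_0\sum_{\mathbf n\in\mathbb Z_{\ge0}^d}\frac{1}{(2|\mathbf n|+1)!}X^{(2\mathbf n+\frac1d\mathbf 1)}\lambda^{\mathbf n}.$$ Then for every $\vec\lambda\in\mathbb C^d$ both series converge uniformly on $[x_1,x_2]$, and $u_1,u_2$ are linearly independent solutions of $$(py')'+qy=(\lambda_1r_1+\cdots+\lambda_dr_d)\,y .$$ Moreover their derivatives are given by the uniformly convergent series $$u_1'=\frac{u_0'}{u_0}u_1+\frac{1}{pu_0}\sum_{\mathbf n\in\mathbb Z_{\ge0}^d,\ \mathbf n\neq 0}\frac{1}{(2|\mathbf n|-1)!}\sum_{i=1}^d\tilde X^{(2\mathbf n-\delta_i)}\lambda^{\mathbf n},$$ $$u_2'=\frac{u_0'}{u_0}u_2+\frac{1}{pu_0}\sum_{\mathbf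 n\in\mathbb Z_{\ge0}^d}\frac{1}{(2|\mathbf n|)!}\sum_{i=1}^dX^{(2\mathbf n-\delta_i+\frac1d\mathbf 1)}\lambda^{\mathbf n},$$ and for every $\vec\lambda$ the initial values are $u_1(x_0)=u_0(x_0)$, $u_1'(x_0)=u_0'(x_0)$, $u_2(x_0)=0$, $u_2'(x_0)=\dfrac{1}{p(x_0)u_0(x_0)}$.
   Context: Notation: for a function $f$ on $[x_1,x_2]$, $\int f$ denotes the function $x\mapsto\int_{x_0}^x f(s)\,ds$. For $\mathbf j=(j_1,\dots,j_d)$, $|\mathbf j|=j_1+\cdots+j_d$; $\delta_i$ is the $i$-th standard basis vector; $\mathbf 1=(1,\dots,1)$; $\lambda^{\mathbf n}=\lambda_1^{n_1}\cdots\lambda_d^{n_d}$. Formal powers $\tilde X$: indexed by $\mathbf j\in\mathbb Z^d$. Call $\mathbf j$ admissible if at most one entry $j_i$ is odd; it is even/odd according to the parity of $|\mathbf j|$ (odd admissible means exactly one $j_i$ is odd). Set $\tilde X^{(\mathbf 0)}\equiv1$ and $\tilde X^{(\mathbf j)}\equiv0$ if some $j_i<0$. For admissible $\mathbf j\ge 0$, $\mathbf j\ne\mathbf 0$: if $|\mathbf j|$ is odd and $j_i$ is its odd entry, $\tilde X^{(\mathbf j)}=|\mathbf j|\int r_iu_0^2\,\tilde X^{(\mathbf j-\delta_i)}$; if $|\mathbf j|$ is even, $\tilde X^{(\mathbf j)}=|\mathbf j|\int\frac{1}{pu_0^2}\sum_{i=1}^d\tilde X^{(\mathbf j-\delta_i)}$.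 Formal powers $X$: indexed by $\mathbf j=\mathbf m+\frac1d\mathbf 1$ with $\mathbf m\in\mathbb Z^d$, so $|\mathbf j|=|\mathbf m|+1$. Call $\mathbf j$ admissible if at most one $m_i$ is odd; its parity is that of $|\mathbf j|$. Set $X^{(\frac1d\mathbf 1-\delta_i)}\equiv\frac1d$ for $i=1,\dots,d$, and $X^{(\mathbf m+\frac1d\mathbf 1)}\equiv0$ whenever some $m_i<0$ and $\mathbf m$ is not one of $-\delta_1,\dots,-\delta_d$. For admissible $\mathbf j=\mathbf m+\frac1d\mathbf 1$ with $\mathbf m\ge0$: if $|\mathbf j|$ is even (so exactly one $m_i$ is odd), $X^{(\mathbf j)}=|\mathbf j|\int r_iu_0^2\,X^{(\mathbf j-\delta_i)}$ with that index $i$; if $|\mathbf j|$ is odd, $X^{(\mathbf j)}=|\mathbf j|\int\frac{1}{pu_0^2}\sum_{i=1}^dX^{(\mathbf j-\delta_i)}$. *)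

From Stdlib Require Import Reals ZArith List.
From Coquelicot Require Import Coquelicot.

Open Scope C_scope.

Definition cont_on (a b : R) (f : R -> C) : Prop :=
  forall x, (a <= x <= b)%R ->
    filterlim f (within (fun y => (a <= y <= b)%R) (locally x)) (locally (f x)).

Definition has_deriv_on (a b : R) (f f' : R -> C) : Prop :=
  forall x, (a <= x <= b)%R ->
    filterlim (fun y => (f y - f x) / RtoC (y - x))
      (within (fun y => (a <= y <= b)%R /\ y <> x) (locally x)) (locally (f' x)).

Definition unif_cv_on (a b : R) (S : nat -> R -> C) (f : R -> C) : Prop :=
  forall eps : R, (0 < eps)%R -> exists N : nat, forall n x, (N <= n)%nat ->
    (a <= x <= b)%R -> (Cmod (S n x - f x) < eps)%R.

Definition cint (x0 : R) (f : R -> C) : R -> C :=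
  fun x => @RInt C_R_CompleteNormedModule f x0 x.

Fixpoint csum (f : nat -> C) (n : nat) : C :=
  match n with O => 0 | S k => csum f k + f k end.

Fixpoint cprod (f : nat -> C) (n : nat) : C :=
  match n with O => 1 | S k => cprod f k * f k end.

(* A multi-index in Z_{>=0}^d (resp. Z^d) is a function nat -> nat (resp.
   nat -> Z) of which only the entries 0..d-1 are used; the paper's index
   i = 1..d corresponds to i-1 here. *)

Definition nsize (d : nat) (n : nat -> nat) : nat :=
  fold_right Nat.add 0%nat (map n (seq 0 d)).

Definition zsize (d : nat) (j : nat -> Z) : Z :=
  fold_right Z.add 0%Z (map j (seq 0 d)).

Definition ncons (a : nat) (n : nat -> nat) : nat -> nat :=
  fun l => match l with O => a | S l' => n l' end.

(* msum_le d N F = sum of F n over all n in Z_{>=0}^d with |n| <= N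
   (the multi-indices are produced with entries 0 beyond d). *)
Fixpoint msum_le (d N : nat) (F : (nat -> nat) -> C) : C :=
  match d with
  | O => F (fun _ => 0%nat)
  | S d' => csum (fun a => msum_le d' (N - a) (fun n => F (ncons a n))) (S N)
  end.

Definition mpow (d : nat) (lam : nat -> C) (n : nat -> nat) : C :=
  cprod (fun i => Cpow (lam i) (n i)) d.

Definition zdelta (i : nat) : nat -> Z := fun l => if Nat.eqb l i then 1%Z else 0%Z.

Definition zsub (j k : nat -> Z) : nat -> Z := fun l => (j l - k l)%Z.

Definition twice (n : nat -> nat) : nat -> Z := fun l => (2 * Z.of_nat (n l))%Z.

Definition has_neg (d : nat) (j : nat -> Z) : bool :=
  existsb (fun i => Z.ltb (j i) 0) (seq 0 d).

Definition all_zero (d : nat) (j : nat -> Z) : bool :=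
  forallb (fun i => Z.eqb (j i) 0) (seq 0 d).

Definition odd_entries (d : nat) (j : nat -> Z) : list nat :=
  filter (fun i => Z.odd (j i)) (seq 0 d).

Definition is_minus_delta (d : nat) (m : nat -> Z) : bool :=
  existsb (fun i => forallb (fun l => Z.eqb (m l) (if Nat.eqb l i then (-1)%Z else 0%Z))
                            (seq 0 d)) (seq 0 d).

Section FormalPowers.
Variables (d : nat) (x0 : R) (p u0 : R -> C) (r : nat -> R -> C).

Definition zC (z : Z) : C := RtoC (IZR z).

(* tilde X with fuel k (k = |j| when called from Xt below) *)
Fixpoint Xt_f (k : nat) (j : nat -> Z) : R -> C :=
  if has_neg d j then (fun _ => 0)
  else if all_zero d j then (fun _ => 1)
  else match k with
  | O => fun _ => 0
  | S k' =>
    match odd_entries d j with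
    | i :: nil =>       (* |j| odd, odd entry j_i *)
        fun x => zC (zsize d j) *
          cint x0 (fun s => r i s * u0 s * u0 s * Xt_f k' (zsub j (zdelta i)) s) x
    | nil =>            (* |j| even *)
        fun x => zC (zsize d j) *
          cint x0 (fun s => / (p s * u0 s * u0 s) *
                     csum (fun i => Xt_f k' (zsub j (zdelta i)) s) d) x
    | _ => fun _ => 0   (* non-admissible index: never used *)
    end
  end.

Definition Xt (j : nat -> Z) : R -> C := Xt_f (Z.to_nat (zsize d j)) j.

(* X^{(m + 1/d 1)} with fuel k (k = |m| + 1 when called from X below) *)
Fixpoint X_f (k : nat) (m : nat -> Z) : R -> C :=
  if is_minus_delta d m then (fun _ => / RtoC (INR d))
  else if has_neg d m then (fun _ => 0)
  else match k with
  | O => fun _ => 0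
  | S k' =>
    match odd_entries d m with
    | i :: nil =>       (* |j| = |m|+1 even, odd entry m_i *)
        fun x => zC (zsize d m + 1) *
          cint x0 (fun s => r i s * u0 s * u0 s * X_f k' (zsub m (zdelta i)) s) x
    | nil =>            (* |j| = |m|+1 odd *)
        fun x => zC (zsize d m + 1) *
          cint x0 (fun s => / (p s * u0 s * u0 s) *
                     csum (fun i => X_f k' (zsub m (zdelta i)) s) d) x
    | _ => fun _ => 0   (* non-admissible index: never used *)
    end
  end.

Definition X (m : nat -> Z) : R -> C := X_f (Z.to_nat (zsize d m + 1)) m.

End FormalPowers.

Definition cfact (n : nat) : C := RtoC (INR (fact n)).

(* Writing u = u0 W and V = p u0^2 W' turns (p u')' + q u = (sum_i lam_i r_i) u into the
   first-order system W' = V / (p u0^2), V' = u0^2 (sum_i lam_i r_i) W.  The recursion defining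
   the formal powers says exactly that the partial sums of the two series for W and V are the
   Picard iterates of this system in integral form, started from (W, V)(x0) = (1, 0) for u1 and
   (0, 1) for u2.  The j-th Picard correction is bounded by K M^j |x - x0|^j / j!, so the series
   converge uniformly and their limits solve the system; this gives u1, u2 with the stated
   derivatives and initial values.  They are independent since u2 vanishes at x0 while u2' does
   not. *)

From Pilot Require Import Defs.
From Stdlib Require Import Reals ZArith List.
From Coquelicot Require Import Coquelicot.
From Stdlib Require Import Lra Lia FunctionalExtensionality ClassicalEpsilon.
Open Scope C_scope.

Lemma Cmod_sub_sym (u v : C) : Cmod (u - v) = Cmod (v - u).
Proof. replace (u - v) with (- (v - u)) by ring. apply Cmod_opp. Qed.

Lemma Cmod_le_eps_eq0 (z : C) : (forall e, (0 < e)%R -> (Cmod z <= e)%R) -> z = 0.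
Proof.
intros H. apply Cmod_eq_0. destruct (Rle_dec (Cmod z) 0).
- generalize (Cmod_ge_0 z); lra.
- specialize (H (Cmod z / 2)%R). lra.
Qed.

Lemma filterlim_C_Cmod {T} {F : (T -> Prop) -> Prop} {FF : Filter F} (f : T -> C) (L : C) :
  filterlim f F (locally L) <->
  (forall eps, (0 < eps)%R -> F (fun y => (Cmod (f y - L) < eps)%R)).
Proof.
assert (Hs2 : (0 < sqrt 2)%R) by (apply sqrt_lt_R0; lra).
split.
- intros H eps Heps.
  assert (Hs : (0 < eps / sqrt 2)%R) by (apply Rdiv_lt_0_compat; lra).
  generalize (proj1 (filterlim_locally f L) H (mkposreal _ Hs)).
  apply filter_imp. intros y Hy.
  apply C_NormedModule_mixin_compat2 in Hy. simpl in Hy.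
  replace eps with (sqrt 2 * (eps / sqrt 2))%R by (field; lra). exact Hy.
- intros H. apply filterlim_locally. intros eps.
  generalize (H eps (cond_pos eps)). apply filter_imp. intros y Hy.
  apply C_NormedModule_mixin_compat1. exact Hy.
Qed.

Lemma filterlim_within_C (P : R -> Prop) (x : R) (g : R -> C) (L : C) :
  filterlim g (within P (locally x)) (locally L) <->
  (forall eps, (0 < eps)%R -> exists del, (0 < del)%R /\
     forall y, P y -> (Rabs (y - x) < del)%R -> (Cmod (g y - L) < eps)%R).
Proof.
rewrite filterlim_C_Cmod. split.
- intros H eps Heps. destruct (H eps Heps) as [del Hdel].
  exists del. split; [apply cond_pos|]. intros y HP Hy. exact (Hdel y Hy HP).
- intros H eps Heps. destruct (H eps Heps) as [del [Hd H1]].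
  exists (mkposreal del Hd). intros y Hy HP. exact (H1 y HP Hy).
Qed.

Section FilterLimits.
Context {T : Type} {F : (T -> Prop) -> Prop} {FF : Filter F}.

Lemma filterlim_Cplus (f g : T -> C) (a b : C) :
  filterlim f F (locally a) -> filterlim g F (locally b) ->
  filterlim (fun y => f y + g y) F (locally (a + b)).
Proof.
intros Hf Hg. apply (filterlim_comp_2 f g Cplus Hf Hg).
apply (@filterlim_plus C_AbsRing C_NormedModule a b).
Qed.

Lemma filterlim_Cmult (f g : T -> C) (a b : C) :
  filterlim f F (locally a) -> filterlim g F (locally b) ->
  filterlim (fun y => f y * g y) F (locally (a * b)).
Proof.
intros Hf Hg. apply filterlim_C_Cmod. intros eps Heps.
assert (Ha := Cmod_ge_0 a). assert (Hb := Cmod_ge_0 b).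
set (K := (Cmod a + Cmod b + 1)%R).
set (del := Rmin 1 (eps / (2 * K))).
assert (HK : (0 < K)%R) by (unfold K; lra).
assert (Hdel : (0 < del)%R) by (apply Rmin_pos; [lra | apply Rdiv_lt_0_compat; lra]).
generalize (filter_and _ _ (proj1 (filterlim_C_Cmod f a) Hf del Hdel)
  (proj1 (filterlim_C_Cmod g b) Hg del Hdel)).
apply filter_imp. intros y [Hy1 Hy2].
assert (Hd1 : (del <= 1)%R) by apply Rmin_l.
assert (Hd2 : (del <= eps / (2 * K))%R) by apply Rmin_r.
replace (f y * g y - a * b) with ((f y - a) * g y + a * (g y - b)) by ring.
eapply Rle_lt_trans; [apply Cmod_triangle|]. rewrite !Cmod_mult.
assert (Hgy : (Cmod (g y) <= Cmod b + 1)%R).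
{ assert (Htr := Cmod_triangle b (g y - b)).
  replace (b + (g y - b)) with (g y) in Htr by ring. lra. }
apply Rle_lt_trans with (del * K)%R.
- unfold K. apply Rle_trans with (del * (Cmod b + 1) + Cmod a * del)%R; [|nra].
  apply Rplus_le_compat.
  + apply Rmult_le_compat; try apply Cmod_ge_0; lra.
  + apply Rmult_le_compat_l; lra.
- apply Rle_lt_trans with (eps / (2 * K) * K)%R; [apply Rmult_le_compat_r; lra|].
  replace (eps / (2 * K) * K)%R with (eps / 2)%R by (field; lra). lra.
Qed.

Lemma filterlim_Copp (f : T -> C) (a : C) :
  filterlim f F (locally a) -> filterlim (fun y => - f y) F (locally (- a)).
Proof.
intros Hf.
assert (H := filterlim_Cmult (fun _ => Copp 1) f (Copp 1) a (filterlim_const _) Hf).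
replace (- a) with (Copp 1 * a) by ring.
eapply filterlim_ext; [|exact H]. intros y; simpl; ring.
Qed.

Lemma filterlim_Cminus (f g : T -> C) (a b : C) :
  filterlim f F (locally a) -> filterlim g F (locally b) ->
  filterlim (fun y => f y - g y) F (locally (a - b)).
Proof. intros Hf Hg. apply filterlim_Cplus; auto. apply filterlim_Copp; auto. Qed.

Lemma filterlim_Cinv (f : T -> C) (a : C) :
  a <> 0 -> filterlim f F (locally a) -> filterlim (fun y => / f y) F (locally (/ a)).
Proof.
intros Ha Hf. apply filterlim_C_Cmod. intros eps Heps.
assert (Hma : (0 < Cmod a)%R) by (apply (proj1 (Cmod_gt_0 a)); auto).
set (del := Rmin (Cmod a / 2) (eps * (Cmod a * Cmod a) / 2)).
assert (Hdel : (0 < del)%R).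
{ apply Rmin_pos; [lra|]. apply Rdiv_lt_0_compat; [|lra].
  apply Rmult_lt_0_compat; auto. apply Rmult_lt_0_compat; auto. }
generalize (proj1 (filterlim_C_Cmod f a) Hf del Hdel). apply filter_imp. intros y Hy.
assert (Hd1 : (del <= Cmod a / 2)%R) by apply Rmin_l.
assert (Hd2 : (del <= eps * (Cmod a * Cmod a) / 2)%R) by apply Rmin_r.
assert (Hfy : (Cmod a / 2 < Cmod (f y))%R).
{ assert (Htr := Cmod_triangle (f y) (a - f y)).
  replace (f y + (a - f y)) with a in Htr by ring.
  rewrite Cmod_sub_sym in Hy. lra. }
assert (Hfy0 : f y <> 0) by (intros E; rewrite E, Cmod_0 in Hfy; lra).
replace (/ f y - / a) with ((a - f y) * / f y * / a) by (field; auto).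
rewrite !Cmod_mult, !Cmod_inv, Cmod_sub_sym by auto.
apply Rlt_le_trans with (del * / (Cmod a / 2) * / Cmod a)%R.
- apply Rmult_lt_compat_r; [apply Rinv_0_lt_compat; auto|].
  apply Rle_lt_trans with (Cmod (f y - a) * / (Cmod a / 2))%R.
  + apply Rmult_le_compat_l; [apply Cmod_ge_0 | apply Rinv_le_contravar; lra].
  + apply Rmult_lt_compat_r; [apply Rinv_0_lt_compat; lra | auto].
- apply Rle_trans with (eps * (Cmod a * Cmod a) / 2 * / (Cmod a / 2) * / Cmod a)%R.
  + apply Rmult_le_compat_r; [left; apply Rinv_0_lt_compat; auto|].
    apply Rmult_le_compat_r; [left; apply Rinv_0_lt_compat; lra | auto].
  + right. field. lra.
Qed.

Lemma filterlim_csum (G : nat -> T -> C) (L : nat -> C) n :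
  (forall i, (i < n)%nat -> filterlim (G i) F (locally (L i))) ->
  filterlim (fun y => csum (fun i => G i y) n) F (locally (csum L n)).
Proof.
induction n; intros H; simpl.
- apply filterlim_const.
- apply filterlim_Cplus; [apply IHn; intros; apply H |apply H]; lia.
Qed.

End FilterLimits.

(** * Continuity and derivatives on a closed interval *)

Section Calculus.
Variables a b : R.

Lemma cont_on_const (c : C) : cont_on a b (fun _ => c).
Proof. intros x Hx. apply filterlim_const. Qed.

Lemma cont_on_mult f g : cont_on a b f -> cont_on a b g -> cont_on a b (fun x => f x * g x).
Proof. intros Hf Hg x Hx. apply filterlim_Cmult; auto. Qed.

Lemma cont_on_minus f g : cont_on a b f -> cont_on a b g -> cont_on a b (fun x => f x - g x).
Proof. intros Hf Hg x Hx. apply filterlim_Cminus; auto. Qed.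

Lemma cont_on_inv f : cont_on a b f -> (forall x, (a <= x <= b)%R -> f x <> 0) ->
  cont_on a b (fun x => / f x).
Proof. intros Hf H0 x Hx. apply filterlim_Cinv; auto. Qed.

Lemma cont_on_csum (G : nat -> R -> C) n : (forall i, (i < n)%nat -> cont_on a b (G i)) ->
  cont_on a b (fun x => csum (fun i => G i x) n).
Proof. intros H x Hx. apply (filterlim_csum G (fun i => G i x)). intros i Hi. apply H; auto. Qed.

Lemma has_deriv_on_cont f f' : has_deriv_on a b f f' -> cont_on a b f.
Proof.
intros Hd x Hx. apply filterlim_within_C. intros eps Heps.
destruct (proj1 (filterlim_within_C _ _ _ _) (Hd x Hx) 1%R Rlt_0_1) as [del [Hdel H]].
set (K := (Cmod (f' x) + 1)%R).
assert (HK : (0 < K)%R) by (unfold K; generalize (Cmod_ge_0 (f' x)); lra).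
exists (Rmin del (eps / K)). split; [apply Rmin_pos; auto; apply Rdiv_lt_0_compat; auto|].
intros y Hy Hyx.
destruct (Req_dec y x) as [->|E].
{ replace (f x - f x) with (RtoC 0) by ring. rewrite Cmod_0; auto. }
assert (Hyx1 : (Rabs (y - x) < del)%R) by (eapply Rlt_le_trans; [exact Hyx| apply Rmin_l]).
assert (Hyx2 : (Rabs (y - x) < eps / K)%R) by (eapply Rlt_le_trans; [exact Hyx| apply Rmin_r]).
specialize (H y (conj Hy E) Hyx1).
assert (Hne : RtoC (y - x) <> 0) by (intros E'; apply E; apply RtoC_inj in E'; lra).
assert (Hq : (Cmod ((f y - f x) / RtoC (y - x)) <= K)%R).
{ assert (Htr := Cmod_triangle (f' x) ((f y - f x) / RtoC (y - x) - f' x)).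
  replace (f' x + ((f y - f x) / RtoC (y - x) - f' x))
    with ((f y - f x) / RtoC (y - x)) in Htr by ring.
  unfold K; lra. }
replace (f y - f x) with ((f y - f x) / RtoC (y - x) * RtoC (y - x)) by (field; auto).
rewrite Cmod_mult, Cmod_R.
apply Rle_lt_trans with (K * Rabs (y - x))%R.
- apply Rmult_le_compat_r; auto. apply Rabs_pos.
- apply Rlt_le_trans with (K * (eps / K))%R; [apply Rmult_lt_compat_l; auto | right; field; lra].
Qed.

Lemma has_deriv_on_ext f g f' g' : (forall x, (a <= x <= b)%R -> f x = g x) ->
  (forall x, (a <= x <= b)%R -> f' x = g' x) ->
  has_deriv_on a b f f' -> has_deriv_on a b g g'.
Proof.
intros E E' Hd x Hx. rewrite <- E' by auto.
apply (filterlim_within_ext _ (fun y => (f y - f x) / RtoC (y - x))).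
- intros y [Hy _]. rewrite !E; auto.
- apply Hd; auto.
Qed.

Lemma has_deriv_on_const (c : C) : has_deriv_on a b (fun _ => c) (fun _ => 0).
Proof.
intros x Hx. eapply filterlim_ext; [|apply (filterlim_const (RtoC 0))].
intros y. simpl. unfold Cdiv. ring.
Qed.

Lemma has_deriv_on_plus f g f' g' : has_deriv_on a b f f' -> has_deriv_on a b g g' ->
  has_deriv_on a b (fun x => f x + g x) (fun x => f' x + g' x).
Proof.
intros Hf Hg x Hx.
eapply filterlim_ext; [|apply filterlim_Cplus; [apply Hf; auto|apply Hg; auto]].
intros y. simpl. unfold Cdiv. ring.
Qed.

Lemma cont_on_punctured f x : cont_on a b f -> (a <= x <= b)%R ->
  filterlim f (within (fun y => (a <= y <= b)%R /\ y <> x) (locally x)) (locally (f x)).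
Proof.
intros Hf Hx P HP. specialize (Hf x Hx P HP).
unfold filtermap, within in *. revert Hf. apply filter_imp. tauto.
Qed.

Lemma has_deriv_on_mult f g f' g' : has_deriv_on a b f f' -> has_deriv_on a b g g' ->
  has_deriv_on a b (fun x => f x * g x) (fun x => f' x * g x + f x * g' x).
Proof.
intros Hf Hg x Hx.
assert (Hcf := cont_on_punctured f x (has_deriv_on_cont f f' Hf) Hx).
eapply filterlim_ext; [|apply filterlim_Cplus;
  [apply filterlim_Cmult; [apply Hf; auto| apply (filterlim_const (g x))]
  | apply filterlim_Cmult; [exact Hcf | apply Hg; auto]]].
intros y. simpl. unfold Cdiv. ring.
Qed.

Lemma has_deriv_on_inv g g' : has_deriv_on a b g g' -> (forall x, (a <= x <= b)%R -> g x <> 0) ->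
  has_deriv_on a b (fun x => / g x) (fun x => - g' x * / (g x * g x)).
Proof.
intros Hg H0 x Hx.
assert (Hcg := cont_on_punctured g x (has_deriv_on_cont g g' Hg) Hx).
apply (filterlim_within_ext _ (fun y => - ((g y - g x) / RtoC (y - x)) * / (g y * g x))).
- intros y [Hy Hyx].
  assert (Hne : RtoC (y - x) <> 0) by (intros E'; apply Hyx; apply RtoC_inj in E'; lra).
  field. repeat split; auto.
- apply filterlim_Cmult; [apply filterlim_Copp, Hg; auto|].
  apply filterlim_Cinv; [apply Cmult_neq_0; auto|].
  apply filterlim_Cmult; auto. apply filterlim_const.
Qed.

Lemma punctured_interval_proper x : (a < b)%R -> (a <= x <= b)%R ->
  ProperFilter' (within (fun y => (a <= y <= b)%R /\ y <> x) (locally x)).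
Proof.
intros Hab Hx. constructor; [|apply within_filter, locally_filter].
intros [del Hdel].
set (h := Rmin (del / 2) ((b - a) / 2)).
assert (Hh : (0 < h)%R) by (apply Rmin_pos; generalize (cond_pos del); lra).
assert (Hh1 : (h <= del / 2)%R) by apply Rmin_l.
assert (Hh2 : (h <= (b - a) / 2)%R) by apply Rmin_r.
destruct (Rlt_dec x b) as [Hxb|Hxb].
- apply (Hdel (x + Rmin h ((b - x) / 2))%R).
  + assert (0 < Rmin h ((b - x) / 2))%R by (apply Rmin_pos; lra).
    assert (Rmin h ((b - x) / 2) <= h)%R by apply Rmin_l.
    change (Rabs (x + Rmin h ((b - x) / 2) - x) < del)%R.
    rewrite Rabs_right; lra.
  + assert (0 < Rmin h ((b - x) / 2))%R by (apply Rmin_pos; lra).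
    assert (Rmin h ((b - x) / 2) <= (b - x) / 2)%R by apply Rmin_r.
    split; lra.
- apply (Hdel (x - h)%R).
  + change (Rabs (x - h - x) < del)%R. rewrite Rabs_left; lra.
  + split; lra.
Qed.

Lemma has_deriv_on_unique f f1 f2 x : (a < b)%R -> (a <= x <= b)%R ->
  has_deriv_on a b f f1 -> has_deriv_on a b f f2 -> f1 x = f2 x.
Proof.
intros Hab Hx H1 H2.
apply (@filterlim_locally_unique _ _ C_NormedModule _
  (punctured_interval_proper x Hab Hx) _ _ _ (H1 x Hx) (H2 x Hx)).
Qed.

End Calculus.

(** * Complex Riemann integrals *)

Lemma is_RInt_Cmult (f : R -> C) (u v : R) (l c : C) :
  @is_RInt C_R_NormedModule f u v l ->
  @is_RInt C_R_NormedModule (fun s => c * f s) u v (c * l).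
Proof.
intros H.
destruct c as [c1 c2]. destruct l as [l1 l2].
assert (H1 := @is_RInt_fct_extend_fst R_NormedModule R_NormedModule f u v (l1, l2) H).
assert (H2 := @is_RInt_fct_extend_snd R_NormedModule R_NormedModule f u v (l1, l2) H).
simpl in H1, H2.
apply (@is_RInt_fct_extend_pair R_NormedModule R_NormedModule (fun s => (c1, c2) * f s)).
- assert (K : @is_RInt R_NormedModule
      (fun s => minus (scal c1 (fst (f s))) (scal c2 (snd (f s)))) u v
      (minus (scal c1 l1) (scal c2 l2))).
  { apply (@is_RInt_minus R_NormedModule); apply (@is_RInt_scal R_NormedModule); auto. }
  match goal with |- is_RInt _ _ _ ?L => replace L with (minus (scal c1 l1) (scal c2 l2)) end.
  2:{ unfold minus, plus, opp, scal; simpl. unfold mult; simpl. ring. }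
  eapply is_RInt_ext; [|exact K].
  intros s _. unfold minus, plus, opp, scal; simpl. unfold mult; simpl.
  destruct (f s); simpl. ring.
- assert (K : @is_RInt R_NormedModule
      (fun s => plus (scal c1 (snd (f s))) (scal c2 (fst (f s)))) u v
      (plus (scal c1 l2) (scal c2 l1))).
  { apply (@is_RInt_plus R_NormedModule); apply (@is_RInt_scal R_NormedModule); auto. }
  match goal with |- is_RInt _ _ _ ?L => replace L with (plus (scal c1 l2) (scal c2 l1)) end.
  2:{ unfold plus, scal; simpl. unfold mult; simpl. ring. }
  eapply is_RInt_ext; [|exact K].
  intros s _. unfold plus, scal; simpl. unfold mult; simpl. destruct (f s); simpl. ring.
Qed.

Lemma RInt_const_C (c : C) u v :
  @RInt C_R_CompleteNormedModule (fun _ => c) u v = RtoC (v - u) * c.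
Proof.
rewrite RInt_const. destruct c. unfold scal; simpl. unfold prod_scal; simpl.
unfold scal; simpl. unfold mult; simpl. unfold Cmult, RtoC; simpl.
apply injective_projections; simpl; ring.
Qed.

(* Extending f from [a,b] by constants turns continuity on [a,b] into continuity on R. *)
Definition clamp (a b x : R) : R := Rmax a (Rmin b x).

Lemma clamp_in a b x : (a <= b)%R -> (a <= clamp a b x <= b)%R.
Proof. intros H. unfold clamp, Rmax, Rmin. repeat destruct Rle_dec; lra. Qed.

Lemma clamp_id a b x : (a <= x <= b)%R -> clamp a b x = x.
Proof. intros H. unfold clamp, Rmax, Rmin. repeat destruct Rle_dec; lra. Qed.

Lemma clamp_1_lipschitz a b y z : (a <= b)%R ->
  (Rabs (clamp a b y - clamp a b z) <= Rabs (y - z))%R.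
Proof.
intros H. unfold clamp, Rmax, Rmin.
repeat destruct Rle_dec; unfold Rabs; repeat destruct Rcase_abs; lra.
Qed.

Lemma continuous_clamp a b (f : R -> C) : (a <= b)%R -> cont_on a b f ->
  forall z, continuous (fun y => f (clamp a b y)) z.
Proof.
intros Hab Hf z.
apply (filterlim_comp _ _ _ (clamp a b) f (locally z)
  (within (fun y => (a <= y <= b)%R) (locally (clamp a b z)))).
- intros P [eps HP]. exists eps. intros y Hy. apply HP.
  + change (Rabs (clamp a b y - clamp a b z) < eps)%R.
    eapply Rle_lt_trans; [apply clamp_1_lipschitz; auto|]. exact Hy.
  + apply clamp_in; auto.
- apply Hf. apply clamp_in; auto.
Qed.

Lemma cont_on_bounded a b f : (a < b)%R -> cont_on a b f ->
  exists M, forall x, (a <= x <= b)%R -> (Cmod (f x) <= M)%R.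
Proof.
intros Hab Hf.
set (h := fun y => Cmod (f (clamp a b y))).
destruct (continuity_ab_maj h a b ltac:(lra)) as [Mx [HM _]].
- intros c _. apply continuity_pt_filterlim.
  unfold h.
  apply (filterlim_comp _ _ _ (fun y => f (clamp a b y)) Cmod _ (locally (f (clamp a b c)))).
  + apply continuous_clamp; auto. lra.
  + eapply filterlim_ext. intros z. symmetry. apply Cmod_norm.
    rewrite Cmod_norm. apply (@filterlim_norm R_AbsRing C_R_NormedModule).
- exists (h Mx). intros x Hx. specialize (HM x Hx). unfold h in HM. rewrite clamp_id in HM; auto.
Qed.

Lemma is_RInt_pow_from (A x0 u : R) (k : nat) :
  is_RInt (fun s => A * (s - x0) ^ k)%R x0 u (A * (u - x0) ^ S k / INR (S k))%R.
Proof.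
assert (HS : INR (S k) <> 0%R) by (apply not_0_INR; lia).
replace (A * (u - x0) ^ S k / INR (S k))%R with
  (minus (A * (u - x0) ^ S k / INR (S k))%R (A * (x0 - x0) ^ S k / INR (S k))%R).
2:{ unfold minus, plus, opp; simpl. rewrite Rminus_diag. field. auto. }
apply (is_RInt_derive (V := R_CompleteNormedModule) (fun s => A * (s - x0) ^ S k / INR (S k))%R).
- intros s _. auto_derive; auto.
  change (match k with 0%nat => 1 | S _ => INR k + 1 end)%R with (INR (S k)).
  unfold Rminus. field. auto.
- intros s _. apply (ex_derive_continuous (V := R_NormedModule)). auto_derive. auto.
Qed.
Lemma is_RInt_pow_to (A x0 u : R) (k : nat) :
  is_RInt (fun s => A * (x0 - s) ^ k)%R u x0 (A * (x0 - u) ^ S k / INR (S k))%R.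
Proof.
assert (HS : INR (S k) <> 0%R) by (apply not_0_INR; lia).
replace (A * (x0 - u) ^ S k / INR (S k))%R with
  (minus (- A * (x0 - x0) ^ S k / INR (S k))%R (- A * (x0 - u) ^ S k / INR (S k))%R).
2:{ unfold minus, plus, opp; simpl. rewrite Rminus_diag. field. auto. }
apply (is_RInt_derive (V := R_CompleteNormedModule) (fun s => - A * (x0 - s) ^ S k / INR (S k))%R).
- intros s _. auto_derive; auto.
  change (match k with 0%nat => 1 | S _ => INR k + 1 end)%R with (INR (S k)).
  unfold Rminus. field. auto.
- intros s _. apply (ex_derive_continuous (V := R_NormedModule)). auto_derive. auto.
Qed.

Section Integrals.
Variables a b : R.
Hypothesis Hab : (a < b)%R.
Notation I x := (a <= x <= b)%R.

Lemma between_in u v s : I u -> I v -> (Rmin u v <= s <= Rmax u v)%R -> I s.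
Proof.
intros Hu Hv Hs. split.
- apply Rle_trans with (Rmin u v); [apply Rmin_glb|]; lra.
- apply Rle_trans with (Rmax u v); [|apply Rmax_lub]; lra.
Qed.

Lemma ex_RInt_cont_on f u v : cont_on a b f -> I u -> I v ->
  @ex_RInt C_R_NormedModule f u v.
Proof.
intros Hf Hu Hv.
apply (ex_RInt_ext (fun y => f (clamp a b y))).
- intros x Hx. rewrite clamp_id; auto. apply (between_in u v); auto. lra.
- apply (@ex_RInt_continuous C_R_CompleteNormedModule).
  intros z _. apply continuous_clamp; auto. lra.
Qed.

Lemma cint_ext x0 f g x : I x0 -> I x -> (forall s, I s -> f s = g s) ->
  cint x0 f x = cint x0 g x.
Proof.
intros H0 Hx E. unfold cint. apply (@RInt_ext C_R_CompleteNormedModule).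
intros s Hs. apply E, (between_in x0 x); auto. lra.
Qed.

Lemma cint_point x0 f : cint x0 f x0 = 0.
Proof. unfold cint. rewrite RInt_point. reflexivity. Qed.

Lemma cint_zero x0 x : cint x0 (fun _ => 0) x = 0.
Proof. unfold cint. rewrite RInt_const_C. ring. Qed.

Lemma cint_plus x0 f g x : I x0 -> I x -> cont_on a b f -> cont_on a b g ->
  cint x0 (fun s => f s + g s) x = cint x0 f x + cint x0 g x.
Proof.
intros H0 Hx Hf Hg. unfold cint.
apply (@RInt_plus C_R_CompleteNormedModule f g); apply ex_RInt_cont_on; auto.
Qed.

Lemma cint_Cmult x0 (c : C) f x : I x0 -> I x -> cont_on a b f ->
  cint x0 (fun s => c * f s) x = c * cint x0 f x.
Proof.
intros H0 Hx Hf. unfold cint.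
apply (@is_RInt_unique C_R_CompleteNormedModule). apply is_RInt_Cmult.
apply (@RInt_correct C_R_CompleteNormedModule). apply ex_RInt_cont_on; auto.
Qed.

Lemma cint_minus x0 f g x : I x0 -> I x -> cont_on a b f -> cont_on a b g ->
  cint x0 (fun s => f s - g s) x = cint x0 f x - cint x0 g x.
Proof.
intros H0 Hx Hf Hg.
rewrite (cint_ext x0 (fun s => f s - g s) (fun s => f s + Copp 1 * g s)) by (auto; intros; ring).
assert (Hg' : cont_on a b (fun s => Copp 1 * g s))
  by (apply cont_on_mult; auto; apply cont_on_const).
rewrite cint_plus, cint_Cmult by auto. ring.
Qed.

Lemma cint_csum x0 (G : nat -> R -> C) n x : I x0 -> I x ->
  (forall i, (i < n)%nat -> cont_on a b (G i)) ->
  cint x0 (fun s => csum (fun i => G i s) n) x = csum (fun i => cint x0 (G i) x) n.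
Proof.
intros H0 Hx. induction n; intros H; simpl.
- apply cint_zero.
- assert (Hc : cont_on a b (fun s => csum (fun i => G i s) n))
    by (apply cont_on_csum; intros; apply H; lia).
  rewrite cint_plus, IHn by (auto; intros; apply H; lia). reflexivity.
Qed.

Lemma cint_sub x0 f x y : I x0 -> I x -> I y -> cont_on a b f ->
  cint x0 f y - cint x0 f x = @RInt C_R_CompleteNormedModule f x y.
Proof.
intros H0 Hx Hy Hf. unfold cint.
rewrite <- (@RInt_Chasles C_R_CompleteNormedModule f x0 x y) by (apply ex_RInt_cont_on; auto).
set (A := @RInt C_R_CompleteNormedModule f x0 x).
set (B := @RInt C_R_CompleteNormedModule f x y).
change (Cplus A B - A = B). ring.
Qed.

Lemma Cmod_RInt_le f u v M : I u -> I v -> cont_on a b f ->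
  (forall s, (Rmin u v <= s <= Rmax u v)%R -> (Cmod (f s) <= M)%R) ->
  (Cmod (@RInt C_R_CompleteNormedModule f u v) <= Rabs (v - u) * M)%R.
Proof.
intros Hu Hv Hf HM.
assert (Hb : forall u v, I u -> I v -> (u <= v)%R ->
  (forall s, (u <= s <= v)%R -> (Cmod (f s) <= M)%R) ->
  (Cmod (@RInt C_R_CompleteNormedModule f u v) <= (v - u) * M)%R).
{ clear u v Hu Hv HM. intros u v Hu Hv Huv HM.
  rewrite Cmod_norm.
  apply (@norm_RInt_le C_R_NormedModule f (fun _ => M) u v _ ((v - u) * M)%R Huv).
  - intros s Hs. rewrite <- Cmod_norm. apply HM. auto.
  - apply (@RInt_correct C_R_CompleteNormedModule). apply ex_RInt_cont_on; auto.
  - exact (@is_RInt_const R_NormedModule u v M). }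
destruct (Rle_dec u v) as [Huv|Huv].
- rewrite Rabs_right by lra. apply Hb; auto. intros s Hs. apply HM.
  rewrite Rmin_left, Rmax_right; lra.
- rewrite Rabs_left by lra.
  rewrite <- (@opp_RInt_swap C_R_CompleteNormedModule) by (apply ex_RInt_cont_on; auto).
  change (Cmod (Copp (@RInt C_R_CompleteNormedModule f v u)) <= - (v - u) * M)%R.
  rewrite Cmod_opp. replace (- (v - u))%R with (u - v)%R by ring.
  apply Hb; auto; [lra|]. intros s Hs. apply HM. rewrite Rmin_right, Rmax_left; lra.
Qed.

Lemma has_deriv_on_cint x0 f : I x0 -> cont_on a b f -> has_deriv_on a b (cint x0 f) f.
Proof.
intros H0 Hf x Hx. apply filterlim_within_C. intros eps Heps.
destruct (proj1 (filterlim_within_C _ _ _ _) (Hf x Hx) (eps / 2)%R) as [del [Hdel H]]; [lra|].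
exists del. split; auto. intros y [Hy Hyx] Hyd.
assert (Hne : RtoC (y - x) <> 0) by (intros E'; apply Hyx; apply RtoC_inj in E'; lra).
rewrite cint_sub; auto.
assert (E : @RInt C_R_CompleteNormedModule f x y / RtoC (y - x) - f x =
   @RInt C_R_CompleteNormedModule (fun s => f s - f x) x y / RtoC (y - x)).
{ assert (E2 := @RInt_minus C_R_CompleteNormedModule f (fun _ => f x) x y).
  change (minus ?A ?B) with (Cminus A B) in E2.
  change (fun s : R => minus (f s) (f x)) with (fun s : R => f s - f x) in E2.
  rewrite E2 by (apply ex_RInt_cont_on; auto; apply cont_on_const).
  rewrite RInt_const_C. field; auto. }
rewrite E, Cmod_div, Cmod_R by auto.
assert (Hpos : (0 < Rabs (y - x))%R) by (apply Rabs_pos_lt; lra).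
apply Rle_lt_trans with (eps / 2)%R; [|lra].
apply Rmult_le_reg_r with (Rabs (y - x)); auto.
unfold Rdiv. rewrite Rmult_assoc, Rinv_l, Rmult_1_r, Rmult_comm by lra.
apply Cmod_RInt_le; auto.
- apply cont_on_minus; auto. apply cont_on_const.
- intros s Hs. left. apply H; [apply (between_in x y); auto|].
  apply Rle_lt_trans with (Rabs (y - x)); auto.
  unfold Rmin, Rmax in Hs. destruct Rle_dec; unfold Rabs; repeat destruct Rcase_abs; lra.
Qed.

Lemma cont_on_cint x0 f : I x0 -> cont_on a b f -> cont_on a b (cint x0 f).
Proof. intros H0 Hf. apply (has_deriv_on_cont a b _ f). apply has_deriv_on_cint; auto. Qed.

Lemma has_deriv_on_cint_affine x0 (c : C) (g W : R -> C) : I x0 -> cont_on a b g ->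
  (forall x, I x -> W x = c + cint x0 g x) -> has_deriv_on a b W g.
Proof.
intros H0 Hg HW.
apply (has_deriv_on_ext a b (fun x => c + cint x0 g x) W (fun x => 0 + g x));
  [intros; symmetry; auto | intros; ring |].
apply has_deriv_on_plus; [apply has_deriv_on_const | apply has_deriv_on_cint; auto].
Qed.

Lemma Cmod_cint_le_pow x0 f x A k : I x0 -> I x -> cont_on a b f ->
  (forall s, I s -> (Cmod (f s) <= A * Rabs (s - x0) ^ k)%R) ->
  (Cmod (cint x0 f x) <= A * Rabs (x - x0) ^ (S k) / INR (S k))%R.
Proof.
intros H0 Hx Hf HA.
assert (Hex : @ex_RInt C_R_NormedModule f x0 x) by (apply ex_RInt_cont_on; auto).
unfold cint. destruct (Rle_dec x0 x) as [Hle|Hlt].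
- rewrite Cmod_norm, Rabs_right by lra.
  apply (@norm_RInt_le C_R_NormedModule f (fun s => A * (s - x0)^k)%R x0 x _ _ Hle).
  + intros s Hs. rewrite <- Cmod_norm, <- (Rabs_right (s - x0)) by lra. apply HA. lra.
  + apply (@RInt_correct C_R_CompleteNormedModule), Hex.
  + apply is_RInt_pow_from.
- rewrite <- (@opp_RInt_swap C_R_CompleteNormedModule) by (apply ex_RInt_swap, Hex).
  change (Cmod (Copp (@RInt C_R_CompleteNormedModule f x x0))
    <= A * Rabs (x - x0) ^ S k / INR (S k))%R.
  rewrite Cmod_opp, Cmod_norm, Rabs_minus_sym, Rabs_right by lra.
  apply (@norm_RInt_le C_R_NormedModule f (fun s => A * (x0 - s)^k)%R x x0 _ _ ltac:(lra)).
  + intros s Hs. rewrite <- Cmod_norm, <- (Rabs_right (x0 - s)), Rabs_minus_sym by lra.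
    apply HA. lra.
  + apply (@RInt_correct C_R_CompleteNormedModule), ex_RInt_swap, Hex.
  + apply is_RInt_pow_to.
Qed.

End Integrals.

(** * Uniform limits *)

Lemma Un_cv_le_const (u : nat -> R) l c e N : Un_cv u l ->
  (forall n, (N <= n)%nat -> (Rabs (u n - c) <= e)%R) -> (Rabs (l - c) <= e)%R.
Proof.
intros Hu H. destruct (Rle_dec (Rabs (l - c)) e) as [|Hn]; auto. exfalso.
destruct (Hu (Rabs (l - c) - e)%R) as [N1 HN1]; [lra|].
specialize (HN1 (Nat.max N N1) ltac:(lia)). specialize (H (Nat.max N N1) ltac:(lia)).
unfold Rdist in HN1.
assert (Htr := Rabs_triang (l - u (Nat.max N N1)) (u (Nat.max N N1) - c)).
replace (l - u (Nat.max N N1) + (u (Nat.max N N1) - c))%R with (l - c)%R in Htr by ring.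
rewrite Rabs_minus_sym in HN1. lra.
Qed.

Lemma Cmod_le_2 (z : C) e : (Rabs (fst z) <= e)%R -> (Rabs (snd z) <= e)%R ->
  (Cmod z <= 2 * e)%R.
Proof.
intros H1 H2. eapply Rle_trans; [apply Cmod_2Rmax|].
assert (Hs : (sqrt 2 <= 2)%R).
{ rewrite <- (sqrt_square 2) at 2 by lra. apply sqrt_le_1_alt. lra. }
assert (Hm : (Rmax (Rabs (fst z)) (Rabs (snd z)) <= e)%R) by (apply Rmax_lub; auto).
assert (0 <= Rmax (Rabs (fst z)) (Rabs (snd z)))%R
  by (eapply Rle_trans; [apply Rabs_pos| apply Rmax_l]).
apply Rmult_le_compat; auto. apply sqrt_pos.
Qed.

(* The real and imaginary parts are handled at once as 1-Lipschitz linear forms [g]. *)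
Lemma Cauchy_C_limit (u : nat -> C) (e : nat -> R) : Un_cv e 0 ->
  (forall n m, (n <= m)%nat -> (Cmod (u m - u n) <= e n)%R) ->
  exists w, forall n, (Cmod (u n - w) <= 2 * e n)%R.
Proof.
intros He Hu.
assert (Hg : forall g : C -> R, (forall z, Rabs (g z) <= Cmod z)%R ->
    (forall z z', g (z - z') = (g z - g z')%R) ->
    exists l, Un_cv (fun n => g (u n)) l /\ forall n, (Rabs (g (u n) - l) <= e n)%R).
{ intros g Hgz Hlin.
  assert (Hgu : forall n m, (n <= m)%nat -> (Rabs (g (u m) - g (u n)) <= e n)%R).
  { intros n m Hnm. rewrite <- Hlin. eapply Rle_trans; [apply Hgz | auto]. }
  destruct (Rcomplete.R_complete (fun n => g (u n))) as [l Hl].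
  { intros eps Heps. destruct (He eps Heps) as [N HN]. exists N. intros n m Hn Hm.
    unfold Rdist in *. specialize (HN (Nat.min n m) ltac:(lia)).
    rewrite Rminus_0_r in HN.
    destruct (Nat.le_ge_cases n m) as [Hnm|Hnm].
    - rewrite Rabs_minus_sym. replace (Nat.min n m) with n in HN by lia.
      eapply Rle_lt_trans; [apply Hgu; auto|]. eapply Rle_lt_trans; [apply Rle_abs | exact HN].
    - replace (Nat.min n m) with m in HN by lia.
      eapply Rle_lt_trans; [apply Hgu; auto|]. eapply Rle_lt_trans; [apply Rle_abs | exact HN]. }
  exists l. split; auto. intros n. rewrite Rabs_minus_sym.
  apply (Un_cv_le_const _ _ _ _ n Hl). intros m Hm. apply Hgu; auto. }
destruct (Hg fst) as [l1 [_ H1]].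
{ intros z. eapply Rle_trans; [apply Rmax_l|apply Rmax_Cmod]. }
{ reflexivity. }
destruct (Hg snd) as [l2 [_ H2]].
{ intros z. eapply Rle_trans; [apply Rmax_r|apply Rmax_Cmod]. }
{ reflexivity. }
exists (l1, l2). intros n. apply Cmod_le_2; [apply H1 | apply H2].
Qed.

Fixpoint rsum (h : nat -> R) (n : nat) : R :=
  match n with O => 0%R | S k => (rsum h k + h k)%R end.

Lemma unif_cv_on_summable_increments a b (F : nat -> R -> C) (h : nat -> R) l :
  (forall k, 0 <= h k)%R -> Un_cv (rsum h) l ->
  (forall k x, (a <= x <= b)%R -> (Cmod (F (S k) x - F k x) <= h k)%R) ->
  exists W, unif_cv_on a b F W.
Proof.
intros Hh Hl HS.
assert (Hinc : forall x, (a <= x <= b)%R -> forall n m, (n <= m)%nat ->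
   (Cmod (F m x - F n x) <= l - rsum h n)%R).
{ intros x Hx n m Hnm.
  assert (Hle : (rsum h m <= l)%R)
    by (apply growing_ineq; auto; intros k; simpl; generalize (Hh k); lra).
  enough (Cmod (F m x - F n x) <= rsum h m - rsum h n)%R by lra.
  induction Hnm.
  - replace (F n x - F n x) with (RtoC 0) by ring. rewrite Cmod_0. lra.
  - simpl in *. replace (F (S m) x - F n x)
      with ((F (S m) x - F m x) + (F m x - F n x)) by ring.
    eapply Rle_trans; [apply Cmod_triangle|].
    specialize (HS m x Hx). specialize (IHHnm ltac:(generalize (Hh m); lra)). lra. }
assert (He : Un_cv (fun n => l - rsum h n)%R 0%R).
{ intros eps Heps. destruct (Hl eps Heps) as [N HN]. exists N. intros n Hn.
  specialize (HN n Hn). unfold Rdist in *. rewrite Rminus_0_r, Rabs_minus_sym. exact HN. }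
assert (Hw : forall x, exists w, (a <= x <= b)%R ->
    forall n, (Cmod (F n x - w) <= 2 * (l - rsum h n))%R).
{ intros x. destruct (Rle_dec a x) as [H1|H1]; [destruct (Rle_dec x b) as [H2|H2]|].
  2,3: exists (RtoC 0); intros; lra.
  destruct (Cauchy_C_limit (fun n => F n x) _ He (Hinc x (conj H1 H2))) as [w Hw].
  exists w. intros _. exact Hw. }
destruct (choice _ Hw) as [W HW].
exists W. intros eps Heps.
destruct (He (eps / 2)%R) as [N HN]; [lra|].
exists N. intros n x Hn Hx.
specialize (HN n Hn). unfold Rdist in HN. rewrite Rminus_0_r in HN.
eapply Rle_lt_trans; [apply HW; auto|].
generalize (Rle_abs (l - rsum h n)); lra.
Qed.

Section UniformLimits.
Variables a b : R.
Hypothesis Hab : (a < b)%R.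
Notation I x := (a <= x <= b)%R.

Lemma unif_cv_on_cont F W : (forall N, cont_on a b (F N)) -> unif_cv_on a b F W ->
  cont_on a b W.
Proof.
intros HS HW x Hx. apply filterlim_within_C. intros eps Heps.
destruct (HW (eps / 3)%R) as [N HN]; [lra|].
destruct (proj1 (filterlim_within_C _ _ _ _) (HS N x Hx) (eps / 3)%R) as [del [Hdel H]]; [lra|].
exists del. split; auto. intros y Hy Hyx.
replace (W y - W x) with ((W y - F N y) + (F N y - F N x) + (F N x - W x)) by ring.
eapply Rle_lt_trans; [apply Cmod_triangle|].
eapply Rle_lt_trans; [apply Rplus_le_compat_r, Cmod_triangle|].
rewrite (Cmod_sub_sym (W y)).
assert (H1 := HN N y (le_n _) Hy). assert (H2 := HN N x (le_n _) Hx).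
specialize (H y Hy Hyx). lra.
Qed.

Lemma unif_cv_on_shift F W : unif_cv_on a b F W ->
  unif_cv_on a b (fun N => F (S N)) W.
Proof.
intros H eps Heps. destruct (H eps Heps) as [N HN]. exists N. intros n x Hn Hx. apply HN; auto.
Qed.

Lemma unif_cv_on_integral_equation x0 (c : C) (A : R -> C) (F G : nat -> R -> C) Wf Vg MA :
  I x0 -> cont_on a b A -> (forall s, I s -> (Cmod (A s) <= MA)%R) ->
  (forall N, cont_on a b (G N)) -> cont_on a b Vg ->
  (forall N x, I x -> F N x = c + cint x0 (fun s => A s * G N s) x) ->
  unif_cv_on a b F Wf -> unif_cv_on a b G Vg ->
  forall x, I x -> Wf x = c + cint x0 (fun s => A s * Vg s) x.
Proof.
intros H0 HA HMA HG HV HF HFW HGV x Hx.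
assert (HMA0 : (0 <= MA)%R) by (eapply Rle_trans; [apply Cmod_ge_0| apply (HMA x Hx)]).
set (R0 := c + cint x0 (fun s => A s * Vg s) x).
replace (Wf x) with ((Wf x - R0) + R0) by ring.
enough (E : Wf x - R0 = 0) by (rewrite E; ring).
apply Cmod_le_eps_eq0. intros e He.
set (e' := (e / (2 * ((b - a) * MA + 1)))%R).
assert (HbaM : (0 <= (b - a) * MA)%R) by (apply Rmult_le_pos; lra).
assert (He' : (0 < e')%R) by (apply Rdiv_lt_0_compat; lra).
destruct (HFW (e / 2)%R) as [N1 HN1]; [lra|].
destruct (HGV e') as [N2 HN2]; [auto|].
set (N := Nat.max N1 N2).
specialize (HN1 N x ltac:(unfold N; lia) Hx).
rewrite Cmod_sub_sym in HN1.
assert (HAG : forall N, cont_on a b (fun s => A s * G N s)) by (intros; apply cont_on_mult; auto).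
assert (HAV : cont_on a b (fun s => A s * Vg s)) by (apply cont_on_mult; auto).
replace (Wf x - R0) with ((Wf x - F N x) + cint x0 (fun s => A s * (G N s - Vg s)) x).
2:{ unfold R0. rewrite (HF N x Hx),
      (cint_ext a b x0 (fun s => A s * (G N s - Vg s)) (fun s => A s * G N s - A s * Vg s)),
      (cint_minus a b Hab) by (auto; intros; ring). ring. }
eapply Rle_trans; [apply Cmod_triangle|].
assert (Hi : (Cmod (cint x0 (fun s => (A s * (G N s - Vg s))%C) x) <= (b - a) * MA * e')%R).
{ unfold cint. eapply Rle_trans.
  - apply (Cmod_RInt_le a b Hab) with (M := (MA * e')%R); auto.
    + apply cont_on_mult; auto. apply cont_on_minus; auto.
    + intros s Hs. assert (Is : I s) by (apply (between_in a b x0 x); auto).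
      rewrite Cmod_mult. apply Rmult_le_compat; auto; try apply Cmod_ge_0.
      left. apply HN2; auto. unfold N; lia.
  - rewrite <- Rmult_assoc. apply Rmult_le_compat_r; [nra|].
    apply Rmult_le_compat_r; auto. unfold Rabs; destruct Rcase_abs; lra. }
assert (Hq : ((b - a) * MA * e' <= e / 2)%R).
{ apply Rmult_le_reg_r with (2 * ((b - a) * MA + 1))%R; [nra|].
  unfold e'. replace ((b - a) * MA * (e / (2 * ((b - a) * MA + 1))) * (2 * ((b - a) * MA + 1)))%R
    with ((b - a) * MA * e)%R by (field; lra). nra. }
lra.
Qed.

End UniformLimits.

(** * Picard iteration for a coupled pair of integral equations *)

Lemma exp_terms_summable (K z : R) : (0 <= K)%R -> (0 <= z)%R ->
  exists l, Un_cv (rsum (fun k => K * (z ^ (2 * k) / INR (fact (2 * k))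
                                  + z ^ S (2 * k) / INR (fact (S (2 * k)))))%R) l.
Proof.
intros HK Hz.
set (g := fun j : nat => (z ^ j / INR (fact j))%R).
assert (Hg0 : forall j, (0 <= g j)%R).
{ intros j. apply Rmult_le_pos; [apply pow_le; auto|].
  left; apply Rinv_0_lt_compat, lt_0_INR, lt_O_fact. }
set (h := fun k => (K * (g (2 * k)%nat + g (S (2 * k))))%R).
assert (Hh0 : forall k, (0 <= h k)%R).
{ intros k. apply Rmult_le_pos; auto. generalize (Hg0 (2 * k)%nat) (Hg0 (S (2 * k))); lra. }
assert (Hrs : forall N, rsum h (S N) = (K * sum_f_R0 g (S (2 * N)))%R).
{ induction N; [simpl; unfold h; simpl; ring|].
  change (rsum h (S (S N))) with (rsum h (S N) + h (S N))%R.
  rewrite IHN. replace (S (2 * S N)) with (S (S (S (2 * N)))) by lia.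
  unfold h. replace (2 * S N)%nat with (S (S (2 * N))) by lia.
  generalize (2 * N)%nat. intros m. simpl sum_f_R0. ring. }
destruct (growing_cv (rsum h)) as [l Hl]; [| |exists l; exact Hl].
- intros n. simpl. generalize (Hh0 n); lra.
- exists (K * exp z)%R. intros r [N ->]. apply Rle_trans with (rsum h (S N)).
  + simpl. generalize (Hh0 N); lra.
  + rewrite Hrs. apply Rmult_le_compat_l; auto. apply exp_ge_taylor; auto.
Qed.

(* Bound for the j-th Picard correction. *)
Definition picard_bound (K M x0 : R) (j : nat) (x : R) : R :=
  (K * M ^ j * Rabs (x - x0) ^ j / INR (fact j))%R.

Section Picard.
Variables a b : R.
Hypothesis Hab : (a < b)%R.
Notation I x := (a <= x <= b)%R.

Lemma picard_bound_le_exp_term K M x0 j x : (0 <= K)%R -> (0 <= M)%R -> I x0 -> I x ->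
  (picard_bound K M x0 j x <= K * ((M * (b - a)) ^ j / INR (fact j)))%R.
Proof.
intros HK HM H0 Hx. unfold picard_bound, Rdiv.
replace (K * M ^ j * Rabs (x - x0) ^ j * / INR (fact j))%R with
  (K * ((M * Rabs (x - x0)) ^ j * / INR (fact j)))%R by (rewrite Rpow_mult_distr; ring).
apply Rmult_le_compat_l; auto. apply Rmult_le_compat_r.
- left; apply Rinv_0_lt_compat, lt_0_INR, lt_O_fact.
- apply pow_incr. split; [apply Rmult_le_pos; auto; apply Rabs_pos|].
  apply Rmult_le_compat_l; auto. unfold Rabs; destruct Rcase_abs; lra.
Qed.

Lemma Cmod_cint_picard_bound K M x0 (Cf g : R -> C) j x : I x0 -> I x ->
  cont_on a b Cf -> cont_on a b g ->
  (forall s, I s -> (Cmod (Cf s) <= M)%R) ->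
  (forall s, I s -> (Cmod (g s) <= picard_bound K M x0 j s)%R) ->
  (Cmod (cint x0 (fun s => (Cf s * g s)%C) x) <= picard_bound K M x0 (S j) x)%R.
Proof.
intros H0 Hx HCf Hg HCM HgM.
assert (Hf := INR_fact_neq_0 j).
assert (HSj : INR (S j) <> 0%R) by (apply not_0_INR; lia).
eapply Rle_trans.
- apply (Cmod_cint_le_pow a b Hab x0 _ x (M * K * M ^ j / INR (fact j))%R j); auto.
  + apply cont_on_mult; auto.
  + intros s Hs. rewrite Cmod_mult.
    apply Rle_trans with (M * picard_bound K M x0 j s)%R.
    * apply Rmult_le_compat; auto; apply Cmod_ge_0.
    * unfold picard_bound. right. field. auto.
- right. unfold picard_bound. rewrite fact_simpl, mult_INR. simpl pow. field. auto.
Qed.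

Section Iteration.
Variables (x0 : R) (A B : R -> C) (c1 c2 : C) (F G : nat -> R -> C).
Hypothesis H0 : I x0.
Hypothesis HA : cont_on a b A.
Hypothesis HB : cont_on a b B.
Hypothesis HF : forall N, cont_on a b (F N).
Hypothesis HG : forall N, cont_on a b (G N).
Hypothesis HFG : forall N x, I x -> F N x = c1 + cint x0 (fun s => A s * G N s) x.
Hypothesis HGF : forall N x, I x ->
  G (S N) x = c2 + cint x0 (fun s => B s * F N s) x.

Lemma cint_step_difference c (E : R -> C) (Q : nat -> R -> C) k x :
  cont_on a b E -> (forall N, cont_on a b (Q N)) -> I x ->
  (c + cint x0 (fun s => E s * Q (S k) s) x) - (c + cint x0 (fun s => E s * Q k s) x)
  = cint x0 (fun s => E s * (Q (S k) s - Q k s)) x.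
Proof.
intros HE HQ Hx.
rewrite (cint_ext a b x0 (fun s => E s * (Q (S k) s - Q k s))
  (fun s => E s * Q (S k) s - E s * Q k s)) by (auto; intros; ring).
rewrite (cint_minus a b Hab) by (auto; apply cont_on_mult; auto). ring.
Qed.

Lemma picard_increments K M :
  (0 <= M)%R -> (forall s, I s -> (Cmod (A s) <= M)%R) -> (forall s, I s -> (Cmod (B s) <= M)%R) ->
  (forall s, I s -> (Cmod (G 1%nat s - G 0%nat s)%C <= K)%R) ->
  forall k x, I x ->
    (Cmod (G (S k) x - G k x)%C <= picard_bound K M x0 (2 * k) x)%R /\
    (Cmod (F (S k) x - F k x)%C <= picard_bound K M x0 (S (2 * k)) x)%R.
Proof.
intros HM HAM HBM HK.
assert (HFstep : forall k, (forall s, I s ->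
    (Cmod (G (S k) s - G k s)%C <= picard_bound K M x0 (2 * k) s)%R) ->
    forall x, I x -> (Cmod (F (S k) x - F k x)%C <= picard_bound K M x0 (S (2 * k)) x)%R).
{ intros k Hk x Hx. rewrite !HFG, (cint_step_difference c1 A G k x) by auto.
  apply Cmod_cint_picard_bound; auto. apply cont_on_minus; auto. }
assert (HG0 : forall s, I s -> (Cmod (G 1%nat s - G 0%nat s)%C <= picard_bound K M x0 0 s)%R).
{ intros s Hs. unfold picard_bound. simpl. replace (K * 1 * 1 / 1)%R with K by field. auto. }
induction k as [|k IHk]; intros x Hx.
- split; [apply HG0 | apply HFstep]; auto.
- assert (HGk : forall s, I s ->
      (Cmod (G (S (S k)) s - G (S k) s)%C <= picard_bound K M x0 (2 * S k) s)%R).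
  { intros s Hs. rewrite !HGF, (cint_step_difference c2 B F k s) by auto.
    replace (2 * S k)%nat with (S (S (2 * k))) by lia.
    apply Cmod_cint_picard_bound; auto; [apply cont_on_minus; auto|].
    intros t Ht. apply IHk; auto. }
  split; [apply HGk | apply HFstep]; auto.
Qed.

Theorem picard :
  exists W V, unif_cv_on a b F W /\ unif_cv_on a b G V /\ cont_on a b W /\ cont_on a b V /\
    (forall x, I x -> W x = c1 + cint x0 (fun s => A s * V s) x) /\
    (forall x, I x -> V x = c2 + cint x0 (fun s => B s * W s) x).
Proof.
destruct (cont_on_bounded a b A Hab HA) as [MA HMA].
destruct (cont_on_bounded a b B Hab HB) as [MB HMB].
destruct (cont_on_bounded a b (fun x => G 1%nat x - G 0%nat x) Hab) as [K HK];
  [apply cont_on_minus; auto|].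
set (M := (Rabs MA + Rabs MB)%R).
assert (HM0 : (0 <= M)%R) by (unfold M; generalize (Rabs_pos MA) (Rabs_pos MB); lra).
assert (HAM : forall s, I s -> (Cmod (A s) <= M)%R).
{ intros s Hs. eapply Rle_trans; [apply HMA; auto|].
  unfold M. generalize (Rle_abs MA) (Rabs_pos MB); lra. }
assert (HBM : forall s, I s -> (Cmod (B s) <= M)%R).
{ intros s Hs. eapply Rle_trans; [apply HMB; auto|].
  unfold M. generalize (Rle_abs MB) (Rabs_pos MA); lra. }
assert (HK0 : (0 <= K)%R) by (eapply Rle_trans; [apply Cmod_ge_0| apply (HK x0 H0)]).
assert (Hz : (0 <= M * (b - a))%R) by (apply Rmult_le_pos; lra).
set (g := fun j : nat => ((M * (b - a)) ^ j / INR (fact j))%R).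
assert (Hg0 : forall j, (0 <= g j)%R).
{ intros j. apply Rmult_le_pos; [apply pow_le; auto|].
  left; apply Rinv_0_lt_compat, lt_0_INR, lt_O_fact. }
destruct (exp_terms_summable K (M * (b - a)) HK0 Hz) as [l Hl].
assert (Hh0 : forall k, (0 <= K * (g (2 * k)%nat + g (S (2 * k))))%R).
{ intros k. apply Rmult_le_pos; auto.
  generalize (Hg0 (2 * k)%nat) (Hg0 (S (2 * k))); lra. }
assert (Hinc := picard_increments K M HM0 HAM HBM HK).
destruct (unif_cv_on_summable_increments a b F _ l Hh0 Hl) as [W HW].
{ intros k x Hx. eapply Rle_trans; [apply Hinc; auto|].
  eapply Rle_trans; [apply picard_bound_le_exp_term; auto|].
  generalize (Hg0 (2 * k)%nat). fold (g (S (2 * k))). nra. }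
destruct (unif_cv_on_summable_increments a b G _ l Hh0 Hl) as [V HV].
{ intros k x Hx. eapply Rle_trans; [apply Hinc; auto|].
  eapply Rle_trans; [apply picard_bound_le_exp_term; auto|].
  generalize (Hg0 (S (2 * k))). fold (g (2 * k)%nat). nra. }
assert (HWc : cont_on a b W) by (apply (unif_cv_on_cont a b F); auto).
assert (HVc : cont_on a b V) by (apply (unif_cv_on_cont a b G); auto).
exists W, V. repeat split; auto.
- apply (unif_cv_on_integral_equation a b Hab x0 c1 A F G W V M); auto.
- apply (unif_cv_on_integral_equation a b Hab x0 c2 B (fun N => G (S N)) F V W M); auto.
  apply unif_cv_on_shift; auto.
Qed.

End Iteration.

Theorem coupled_picard x0 (A B : R -> C) (c1 c2 : C) (F G : nat -> R -> C) :
  I x0 -> cont_on a b A -> cont_on a b B ->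
  (forall N, cont_on a b (F N)) -> (forall N, cont_on a b (G N)) ->
  (forall N x, I x -> F N x = c1 + cint x0 (fun s => A s * G N s) x) ->
  (forall N x, I x -> G (S N) x = c2 + cint x0 (fun s => B s * F N s) x) ->
  exists W V, unif_cv_on a b F W /\ unif_cv_on a b G V /\
    has_deriv_on a b W (fun x => A x * V x) /\ has_deriv_on a b V (fun x => B x * W x) /\
    W x0 = c1 /\ V x0 = c2.
Proof.
intros H0 HA HB HF HG HFG HGF.
destruct (picard x0 A B c1 c2 F G) as [W [V [HW [HV [HWc [HVc [HWe HVe]]]]]]]; auto.
exists W, V. repeat split; auto.
- apply (has_deriv_on_cint_affine a b Hab x0 c1); auto. apply cont_on_mult; auto.
- apply (has_deriv_on_cint_affine a b Hab x0 c2); auto. apply cont_on_mult; auto.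
- rewrite HWe, cint_point by auto. ring.
- rewrite HVe, cint_point by auto. ring.
Qed.

End Picard.

(** * Multi-indices *)

Lemma fold_Zadd_init (l : list Z) c : fold_right Z.add c l = (fold_right Z.add 0 l + c)%Z.
Proof. induction l; simpl; lia. Qed.

Lemma fold_Nadd_init (l : list nat) c : fold_right Nat.add c l = (fold_right Nat.add 0 l + c)%nat.
Proof. induction l; simpl; lia. Qed.

Lemma zsize_S d j : zsize (S d) j = (zsize d j + j d)%Z.
Proof. unfold zsize. rewrite seq_S, map_app, fold_right_app. simpl. rewrite fold_Zadd_init. lia.
  Qed.

Lemma nsize_S d n : nsize (S d) n = (nsize d n + n d)%nat.
Proof. unfold nsize. rewrite seq_S, map_app, fold_right_app. simpl. rewrite fold_Nadd_init. lia.
  Qed.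

Lemma nsize_ncons d a n : nsize (S d) (ncons a n) = (a + nsize d n)%nat.
Proof.
induction d.
- reflexivity.
- rewrite nsize_S, IHd, nsize_S. simpl. lia.
Qed.

Lemma nsize_const0 d : nsize d (fun _ => 0%nat) = 0%nat.
Proof. induction d. reflexivity. rewrite nsize_S, IHd. reflexivity. Qed.

Lemma zsize_twice d n : zsize d (twice n) = (2 * Z.of_nat (nsize d n))%Z.
Proof. induction d. reflexivity. rewrite zsize_S, nsize_S, IHd. unfold twice. lia. Qed.

Lemma zsize_sub d j k : zsize d (zsub j k) = (zsize d j - zsize d k)%Z.
Proof. induction d. reflexivity. rewrite !zsize_S, IHd. unfold zsub. lia. Qed.

Lemma zsize_zero d j : (forall l, (l < d)%nat -> j l = 0%Z) -> zsize d j = 0%Z.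
Proof. induction d; intros H. reflexivity. rewrite zsize_S, IHd, H; auto; intros; apply H; lia. Qed.

Lemma zsize_delta d i : (i < d)%nat -> zsize d (zdelta i) = 1%Z.
Proof.
induction d; intros H. lia.
rewrite zsize_S. destruct (Nat.eq_dec i d).
- subst. rewrite zsize_zero. unfold zdelta. rewrite Nat.eqb_refl. lia.
  intros l Hl. unfold zdelta. destruct (Nat.eqb_spec l d); lia.
- rewrite IHd by lia. unfold zdelta. destruct (Nat.eqb_spec d i); lia.
Qed.

Lemma nsize_eq0 d n : nsize d n = 0%nat -> forall l, (l < d)%nat -> n l = 0%nat.
Proof.
induction d; intros H l Hl. lia. rewrite nsize_S in H.
destruct (Nat.eq_dec l d). subst; lia. apply IHd; lia.
Qed.

Lemma nsize_ge d n l : (l < d)%nat -> (n l <= nsize d n)%nat.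
Proof.
induction d; intros Hl. lia. rewrite nsize_S.
destruct (Nat.eq_dec l d). subst; lia. specialize (IHd ltac:(lia)). lia.
Qed.

Lemma nsize_pos d n : nsize d n <> 0%nat -> exists l, (l < d)%nat /\ n l <> 0%nat.
Proof.
induction d; intros H. { now elim H. } rewrite nsize_S in H.
destruct (Nat.eq_dec (n d) 0). destruct IHd as [l [Hl1 Hl2]]. lia. exists l; split; auto.
exists d; split; auto.
Qed.

Lemma twice_nonneg n l : (0 <= twice n l)%Z.
Proof. unfold twice. lia. Qed.

Lemma twice_sub_delta_entry n i l : zsub (twice n) (zdelta i) l = (2
  * Z.of_nat (n l) - (if Nat.eqb l i then 1 else 0))%Z.
Proof. reflexivity. Qed.

Lemma has_neg_true d j : has_neg d j = true <-> exists l, (l < d)%nat /\ (j l < 0)%Z.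
Proof.
unfold has_neg. rewrite existsb_exists. split.
- intros [l [H1 H2]]. apply in_seq in H1. exists l. split. lia. apply Z.ltb_lt; auto.
- intros [l [H1 H2]]. exists l. split. apply in_seq; lia. apply Z.ltb_lt; auto.
Qed.

Lemma has_neg_false d j : (forall l, (l < d)%nat -> (0 <= j l)%Z) -> has_neg d j = false.
Proof.
intros H. destruct (has_neg d j) eqn:E; auto. apply has_neg_true in E.
destruct E as [l [H1 H2]]. specialize (H l H1). lia.
Qed.

Lemma all_zero_true d j : all_zero d j = true <-> forall l, (l < d)%nat -> j l = 0%Z.
Proof.
unfold all_zero. rewrite forallb_forall. split.
- intros H l Hl. apply Z.eqb_eq. apply H. apply in_seq; lia.
- intros H l Hl. apply in_seq in Hl. apply Z.eqb_eq. apply H; lia.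
Qed.

Lemma all_zero_false d j l : (l < d)%nat -> j l <> 0%Z -> all_zero d j = false.
Proof.
intros Hl Hj. destruct (all_zero d j) eqn:E; auto. rewrite all_zero_true in E.
exfalso. apply Hj. apply E; auto.
Qed.

Lemma is_minus_delta_true d m : is_minus_delta d m = true <->
  exists i, (i < d)%nat /\ forall l, (l < d)%nat -> m l = (if Nat.eqb l i then (-1)%Z else 0%Z).
Proof.
unfold is_minus_delta. rewrite existsb_exists. split.
- intros [i [H1 H2]]. apply in_seq in H1. exists i. split. lia.
  rewrite forallb_forall in H2. intros l Hl. apply Z.eqb_eq. apply H2. apply in_seq; lia.
- intros [i [H1 H2]]. exists i. split. apply in_seq; lia.
  rewrite forallb_forall. intros l Hl. apply in_seq in Hl. apply Z.eqb_eq. apply H2. lia.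
Qed.

Lemma is_minus_delta_false d m : (forall l, (l < d)%nat -> (0 <= m l)%Z) ->
  is_minus_delta d m = false.
Proof.
intros H. destruct (is_minus_delta d m) eqn:E; auto. apply is_minus_delta_true in E.
destruct E as [i [H1 H2]]. specialize (H2 i H1). rewrite Nat.eqb_refl in H2. specialize (H i H1).
  lia.
Qed.

Lemma filter_seq_nil (f : nat -> bool) s len :
  (forall l, (s <= l < s + len)%nat -> f l = false) -> filter f (seq s len) = nil.
Proof.
revert s. induction len; intros s H. reflexivity.
simpl. rewrite H by lia. apply IHlen. intros; apply H; lia.
Qed.

Lemma filter_seq_one (f : nat -> bool) s len i : (s <= i < s + len)%nat ->
  (forall l, (s <= l < s + len)%nat -> f l = Nat.eqb l i) -> filter f (seq s len) = i :: nil.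
Proof.
revert s. induction len; intros s Hi H. lia.
simpl. rewrite H by lia. destruct (Nat.eqb_spec s i).
- subst. f_equal. apply filter_seq_nil. intros l Hl. rewrite H by lia. apply Nat.eqb_neq. lia.
- apply IHlen. lia. intros; apply H; lia.
Qed.

Lemma odd_entries_in d j i : In i (odd_entries d j) -> (i < d)%nat.
Proof. unfold odd_entries. intros H. apply filter_In in H. destruct H as [H _].
  apply in_seq in H. lia. Qed.

Lemma odd_entries_twice d n : odd_entries d (twice n) = nil.
Proof.
unfold odd_entries. apply filter_seq_nil. intros l _. unfold twice.
rewrite Z.odd_mul. reflexivity.
Qed.

Lemma odd_entries_twice_sub_delta d n i : (i < d)%nat ->
  odd_entries d (zsub (twice n) (zdelta i)) = i :: nil.
Proof.
intros Hi. unfold odd_entries. apply filter_seq_one. lia.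
intros l _. unfold zsub, twice, zdelta. destruct (Nat.eqb_spec l i).
- rewrite Z.odd_sub, Z.odd_mul. reflexivity.
- rewrite Z.sub_0_r, Z.odd_mul. reflexivity.
Qed.

Definition decr (i : nat) (n : nat -> nat) : nat -> nat :=
  fun l => if Nat.eqb l i then (n l - 1)%nat else n l.

Lemma twice_decr i n : (1 <= n i)%nat -> zsub (zsub (twice n) (zdelta i)) (zdelta i)
  = twice (decr i n).
Proof.
intros H. apply functional_extensionality. intros l. unfold zsub, twice, zdelta, decr.
destruct (Nat.eqb_spec l i). subst. lia. lia.
Qed.

Lemma nsize_decr d i n : (i < d)%nat -> (1 <= n i)%nat -> nsize d (decr i n) = (nsize d n - 1)%nat.
Proof.
intros Hi Hn.
assert (E := zsize_twice d (decr i n)). rewrite <- twice_decr in E by auto.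
rewrite !zsize_sub, zsize_twice, zsize_delta in E by auto.
assert (Hge := nsize_ge d n i Hi). lia.
Qed.

Lemma csum_S (f : nat -> C) n : csum f (S n) = csum f n + f n.
Proof. reflexivity. Qed.

Lemma csum_ext (f g : nat -> C) n : (forall i, (i < n)%nat -> f i = g i) -> csum f n = csum g n.
Proof. induction n; intros H; simpl. auto. rewrite IHn, H; auto; intros; apply H; lia. Qed.

Lemma csum_plus (f g : nat -> C) n : csum (fun i => f i + g i) n = csum f n + csum g n.
Proof. induction n; simpl. ring. rewrite IHn. ring. Qed.

Lemma csum_mult_l (c : C) (f : nat -> C) n : csum (fun i => c * f i) n = c * csum f n.
Proof. induction n; simpl. ring. rewrite IHn. ring. Qed.

Lemma csum_mult_r (c : C) (f : nat -> C) n : csum (fun i => f i * c) n = csum f n * c.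
Proof. rewrite <- (Cmult_comm c), <- csum_mult_l. apply csum_ext. intros; ring. Qed.

Lemma csum_zero n : csum (fun _ => 0) n = 0.
Proof. induction n; simpl. auto. rewrite IHn. ring. Qed.

Lemma csum_shift (f : nat -> C) n : csum f (S n) = f 0%nat + csum (fun i => f (S i)) n.
Proof. induction n; simpl in *. ring. rewrite IHn. ring. Qed.

Lemma csum_const (c : C) n : csum (fun _ => c) n = RtoC (INR n) * c.
Proof.
induction n; simpl csum. rewrite Cmult_0_l. reflexivity.
rewrite IHn. rewrite S_INR. rewrite RtoC_plus. ring.
Qed.

Lemma msum_le_ext d N (F G : (nat -> nat) -> C) : (forall n, F n = G n) ->
  msum_le d N F = msum_le d N G.
Proof. intros H. f_equal. apply functional_extensionality. auto. Qed.

Lemma msum_le_plus d N (F G : (nat -> nat) ->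
  C) : msum_le d N (fun n => F n + G n) = msum_le d N F + msum_le d N G.
Proof.
revert N F G. induction d; intros N F G; cbn [msum_le]. auto.
rewrite <- (csum_plus (fun a => msum_le d (N - a) (fun n => F (ncons a n)))
  (fun a => msum_le d (N - a) (fun n => G (ncons a n)))).
apply csum_ext. intros a _. apply IHd.
Qed.

Lemma msum_le_mult_l d N (c : C) (F : (nat -> nat) ->
  C) : msum_le d N (fun n => c * F n) = c * msum_le d N F.
Proof.
revert N F. induction d; intros N F; cbn [msum_le]. auto.
rewrite <- (csum_mult_l c (fun a => msum_le d (N - a) (fun n => F (ncons a n)))). apply csum_ext.
  intros a _. apply IHd.
Qed.

Lemma msum_le_zero d N : msum_le d N (fun _ => 0) = 0.
Proof.
revert N. induction d; intros N; cbn [msum_le]. auto.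
transitivity (csum (fun _ => 0) (S N)). apply csum_ext. intros a _. apply IHd. apply csum_zero.
Qed.

Lemma msum_le_csum d N (F : nat -> (nat -> nat) -> C) k :
  msum_le d N (fun n => csum (fun i => F i n) k) = csum (fun i => msum_le d N (F i)) k.
Proof.
induction k; simpl. apply msum_le_zero.
rewrite msum_le_plus, IHk. reflexivity.
Qed.

Lemma ncons_zero : ncons 0 (fun _ => 0%nat) = (fun _ => 0%nat).
Proof. apply functional_extensionality. intros [|l]; reflexivity. Qed.

Lemma msum_le_0 d (F : (nat -> nat) -> C) : msum_le d 0 F = F (fun _ => 0%nat).
Proof.
revert F. induction d; intros F. reflexivity.
simpl. rewrite IHd. rewrite ncons_zero. ring.
Qed.

Lemma msum_le_only0 d N (F : (nat -> nat) -> C) : (forall n, nsize d n <> 0%nat -> F n = 0) ->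
  msum_le d N F = F (fun _ => 0%nat).
Proof.
revert N F. induction d; intros N F H. reflexivity.
cbn [msum_le]. rewrite csum_shift.
rewrite IHd. 2:{ intros n Hn. apply H. rewrite nsize_ncons. lia. }
rewrite ncons_zero.
rewrite (csum_ext _ (fun _ => 0)). rewrite csum_zero. ring.
intros a _. rewrite <- (msum_le_zero d (N - S a)). apply msum_le_ext. intros n. apply H.
rewrite nsize_ncons. lia.
Qed.

Lemma decr_ncons0 a n : decr 0 (ncons a n) = ncons (a - 1) n.
Proof. apply functional_extensionality. intros [|l]; reflexivity. Qed.

Lemma decr_nconsS i a n : decr (S i) (ncons a n) = ncons a (decr i n).
Proof. apply functional_extensionality. intros [|l]; reflexivity. Qed.

Lemma msum_le_shift_decr d i N (G : (nat -> nat) -> C) : (i < d)%nat ->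
  msum_le d (S N) (fun n => if Nat.leb 1 (n i) then G (decr i n) else 0) = msum_le d N G.
Proof.
revert i N G. induction d; intros i N G Hi. lia.
cbn [msum_le]. destruct i as [|i].
- rewrite csum_shift. simpl ncons at 1. rewrite msum_le_zero, Cplus_0_l.
  apply csum_ext. intros a Ha.
  apply msum_le_ext. intros n. simpl. rewrite decr_ncons0. f_equal. f_equal. lia.
- rewrite csum_S, Nat.sub_diag, msum_le_0. simpl ncons. simpl Nat.leb. rewrite Cplus_0_r.
  apply csum_ext. intros a Ha. replace (S N - a)%nat with (S (N - a)) by lia.
  simpl ncons. rewrite <- (IHd i (N - a)%nat (fun n => G (ncons a n))) by lia.
  apply msum_le_ext. intros n. rewrite decr_nconsS. reflexivity.
Qed.

Lemma cprod_ext (f g : nat -> C) n : (forall l, (l < n)%nat -> f l = g l) -> cprod f n = cprod g n.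
Proof. induction n; intros H; simpl. auto. rewrite IHn, H; auto; intros; apply H; lia. Qed.

Lemma cprod_one_change (f g : nat -> C) (c : C) i n : (i < n)%nat ->
  (forall l, (l < n)%nat -> l <> i -> f l = g l) -> f i = c * g i ->
  cprod f n = c * cprod g n.
Proof.
induction n; intros Hi H Hfi. lia. simpl.
destruct (Nat.eq_dec i n).
- subst. rewrite Hfi. rewrite (cprod_ext f g). ring. intros; apply H; lia.
- rewrite IHn; [| lia | intros; apply H; lia | auto]. rewrite H by lia. ring.
Qed.

Lemma cprod_ones (f : nat -> C) n : (forall l, (l < n)%nat -> f l = 1) -> cprod f n = 1.
Proof. induction n; intros H; simpl. auto. rewrite IHn, H; auto. ring. Qed.

Lemma mpow_decr d lam n i : (i < d)%nat -> (1 <= n i)%nat ->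
  mpow d lam n = lam i * mpow d lam (decr i n).
Proof.
intros Hi Hn. unfold mpow. apply cprod_one_change with i; auto.
- intros l Hl Hli. unfold decr. apply Nat.eqb_neq in Hli. rewrite Hli. reflexivity.
- unfold decr. rewrite Nat.eqb_refl. destruct (n i) as [|k]. lia. simpl.
  replace (k - 0)%nat with k by lia. reflexivity.
Qed.

Lemma mpow_zero d lam n : nsize d n = 0%nat -> mpow d lam n = 1.
Proof.
intros Hn. unfold mpow. apply cprod_ones. intros l Hl. rewrite (nsize_eq0 d n Hn l Hl). reflexivity.
Qed.

Lemma RtoC_neq_0 (x : R) : x <> 0%R -> RtoC x <> 0.
Proof. intros H E. apply H. apply RtoC_inj. exact E. Qed.

Lemma zC_nat k : zC (Z.of_nat k) = RtoC (INR k).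
Proof. unfold zC. rewrite <- INR_IZR_INZ. reflexivity. Qed.

Lemma cfact_0 : cfact 0 = 1.
Proof. reflexivity. Qed.

(* [k / k! = 1 / (k-1)!], the identity behind the factorials in the series. *)
Lemma Cinv_cfact_pred z k j : k = S j -> z = Z.of_nat k -> / cfact j = zC z / cfact k.
Proof.
intros -> ->. rewrite zC_nat. unfold cfact.
rewrite fact_simpl, mult_INR, RtoC_mult.
assert (H1 : RtoC (INR (S j)) <> 0) by (apply RtoC_neq_0, not_0_INR; lia).
assert (H2 : RtoC (INR (fact j)) <> 0) by (apply RtoC_neq_0, INR_fact_neq_0).
field. auto.
Qed.

Section MsumIntegrals.
Variables a b : R.
Hypothesis Hab : (a < b)%R.

Lemma cont_on_msum_le d N (F : (nat -> nat) -> R -> C) : (forall n, cont_on a b (F n)) ->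
  cont_on a b (fun x => msum_le d N (fun n => F n x)).
Proof.
revert N F. induction d; intros N F H; cbn [msum_le]. apply H.
apply (cont_on_csum a b (fun a0 x => msum_le d (N - a0) (fun n => F (ncons a0 n) x))).
intros i _. apply (IHd (N - i)%nat (fun n => F (ncons i n))). intros; apply H.
Qed.

Lemma cint_msum_le x0 d N (F : (nat -> nat) -> R -> C) x : (a <= x0 <= b)%R -> (a <= x <= b)%R ->
  (forall n, cont_on a b (F n)) ->
  cint x0 (fun s => msum_le d N (fun n => F n s)) x = msum_le d N (fun n => cint x0 (F n) x).
Proof.
intros H0 Hx. revert N F. induction d; intros N F H; cbn [msum_le]. reflexivity.
rewrite (cint_csum a b Hab x0 (fun a0 s => msum_le d (N - a0) (fun n => F (ncons a0 n) s))); auto.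
- apply csum_ext. intros i _. apply (IHd (N - i)%nat (fun n => F (ncons i n))). intros; apply H.
- intros i _. apply (cont_on_msum_le d (N - i)%nat (fun n => F (ncons i n))). intros; apply H.
Qed.

End MsumIntegrals.

(** * Recursion equations of the formal powers *)

Section FormalPowerEquations.
Variables (d : nat) (x0 : R) (p u0 : R -> C) (r : nat -> R -> C).

Notation Xt := (Xt d x0 p u0 r).
Notation X := (X d x0 p u0 r).

Lemma Xt_twice n : nsize d n <> 0%nat ->
  Xt (twice n) = fun x => zC (2 * Z.of_nat (nsize d n)) *
    cint x0 (fun s => / (p s * u0 s * u0 s) * csum (fun i => Xt (zsub (twice n) (zdelta i)) s) d) x.
Proof.
intros Hn. unfold Defs.Xt at 1.
replace (Z.to_nat (zsize d (twice n))) with (S (2 * nsize d n - 1)) by (rewrite zsize_twice; lia).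
cbn [Xt_f].
rewrite has_neg_false by (intros; apply twice_nonneg).
destruct (nsize_pos d n Hn) as [l [Hl Hl2]].
rewrite (all_zero_false d _ l) by (auto; unfold twice; lia).
rewrite odd_entries_twice. rewrite zsize_twice.
apply functional_extensionality. intros x. f_equal. f_equal.
apply functional_extensionality. intros s. f_equal.
apply csum_ext. intros i Hi. unfold Defs.Xt.
f_equal. rewrite zsize_sub, zsize_twice, zsize_delta by auto. lia.
Qed.

Lemma Xt_twice_zero n : nsize d n = 0%nat -> Xt (twice n) = fun _ => 1.
Proof.
intros Hn. unfold Defs.Xt.
replace (Z.to_nat (zsize d (twice n))) with 0%nat by (rewrite zsize_twice; lia).
cbn [Xt_f].
rewrite has_neg_false by (intros; apply twice_nonneg).
replace (all_zero d (twice n)) with true; auto.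
symmetry. apply all_zero_true. intros l Hl. unfold twice. rewrite (nsize_eq0 d n Hn l Hl). lia.
Qed.

Lemma Xt_twice_sub_delta n i : (i < d)%nat -> (1 <= n i)%nat ->
  Xt (zsub (twice n) (zdelta i)) = fun x => zC (2 * Z.of_nat (nsize d n) - 1) *
    cint x0 (fun s => r i s * u0 s * u0 s * Xt (twice (decr i n)) s) x.
Proof.
intros Hi Hn. assert (Hge := nsize_ge d n i Hi).
unfold Defs.Xt at 1.
replace (Z.to_nat (zsize d (zsub (twice n) (zdelta i)))) with (S (2 * nsize d n - 2))
  by (rewrite zsize_sub, zsize_twice, zsize_delta by auto; lia).
cbn [Xt_f].
rewrite has_neg_false.
2:{ intros l Hl. rewrite twice_sub_delta_entry. destruct (Nat.eqb_spec l i); subst; lia. }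
rewrite (all_zero_false d _ i) by (auto; rewrite twice_sub_delta_entry, Nat.eqb_refl; lia).
rewrite odd_entries_twice_sub_delta by auto.
rewrite twice_decr by auto.
rewrite zsize_sub, zsize_twice, zsize_delta by auto.
apply functional_extensionality. intros x. f_equal. f_equal.
apply functional_extensionality. intros s. f_equal.
unfold Defs.Xt. f_equal. rewrite zsize_twice, nsize_decr by auto. lia.
Qed.

Lemma Xt_twice_sub_delta_zero n i : (i < d)%nat -> n i = 0%nat ->
  Xt (zsub (twice n) (zdelta i)) = fun _ => 0.
Proof.
intros Hi Hn. unfold Defs.Xt.
assert (Hneg : has_neg d (zsub (twice n) (zdelta i)) = true).
{ apply has_neg_true. exists i. split; auto. rewrite twice_sub_delta_entry, Nat.eqb_refl, Hn. lia. }
destruct (Z.to_nat (zsize d (zsub (twice n) (zdelta i)))); cbn [Xt_f]; rewrite Hneg; reflexivity.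
Qed.

Lemma X_twice n :
  X (twice n) = fun x => zC (2 * Z.of_nat (nsize d n) + 1) *
    cint x0 (fun s => / (p s * u0 s * u0 s) * csum (fun i => X (zsub (twice n) (zdelta i)) s) d) x.
Proof.
unfold Defs.X at 1.
replace (Z.to_nat (zsize d (twice n) + 1)) with (S (2 * nsize d n)) by (rewrite zsize_twice; lia).
cbn [X_f].
rewrite is_minus_delta_false by (intros; apply twice_nonneg).
rewrite has_neg_false by (intros; apply twice_nonneg).
rewrite odd_entries_twice. rewrite zsize_twice.
apply functional_extensionality. intros x. f_equal. f_equal.
apply functional_extensionality. intros s. f_equal.
apply csum_ext. intros i Hi. unfold Defs.X.
f_equal. rewrite zsize_sub, zsize_twice, zsize_delta by auto. lia.
Qed.

Lemma X_twice_sub_delta n i : (i < d)%nat -> (1 <= n i)%nat ->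
  X (zsub (twice n) (zdelta i)) = fun x => zC (2 * Z.of_nat (nsize d n)) *
    cint x0 (fun s => r i s * u0 s * u0 s * X (twice (decr i n)) s) x.
Proof.
intros Hi Hn. assert (Hge := nsize_ge d n i Hi).
unfold Defs.X at 1.
replace (Z.to_nat (zsize d (zsub (twice n) (zdelta i)) + 1)) with (S (2 * nsize d n - 1))
  by (rewrite zsize_sub, zsize_twice, zsize_delta by auto; lia).
cbn [X_f].
rewrite is_minus_delta_false.
2:{ intros l Hl. rewrite twice_sub_delta_entry. destruct (Nat.eqb_spec l i); subst; lia. }
rewrite has_neg_false.
2:{ intros l Hl. rewrite twice_sub_delta_entry. destruct (Nat.eqb_spec l i); subst; lia. }
rewrite odd_entries_twice_sub_delta by auto.
rewrite twice_decr by auto.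
rewrite zsize_sub, zsize_twice, zsize_delta by auto.
replace (2 * Z.of_nat (nsize d n) - 1 + 1)%Z with (2 * Z.of_nat (nsize d n))%Z by lia.
apply functional_extensionality. intros x. f_equal. f_equal.
apply functional_extensionality. intros s. f_equal.
unfold Defs.X. f_equal. rewrite zsize_twice, nsize_decr by auto. lia.
Qed.

Lemma X_minus_delta n i : (i < d)%nat -> nsize d n = 0%nat ->
  X (zsub (twice n) (zdelta i)) = fun _ => / RtoC (INR d).
Proof.
intros Hi Hn. unfold Defs.X.
assert (Hm : is_minus_delta d (zsub (twice n) (zdelta i)) = true).
{ apply is_minus_delta_true. exists i. split; auto. intros l Hl. rewrite twice_sub_delta_entry.
  rewrite (nsize_eq0 d n Hn l Hl). destruct (Nat.eqb l i); lia. }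
destruct (Z.to_nat (zsize d (zsub (twice n) (zdelta i)) + 1)); cbn [X_f]; rewrite Hm; reflexivity.
Qed.

Lemma X_twice_sub_delta_zero n i : (i < d)%nat -> n i = 0%nat -> nsize d n <> 0%nat ->
  X (zsub (twice n) (zdelta i)) = fun _ => 0.
Proof.
intros Hi Hn Hs. unfold Defs.X.
assert (Hm : is_minus_delta d (zsub (twice n) (zdelta i)) = false).
{ destruct (is_minus_delta d (zsub (twice n) (zdelta i))) eqn:E; auto.
  apply is_minus_delta_true in E. destruct E as [i' [Hi' H]].
  destruct (nsize_pos d n Hs) as [l0 [Hl0 Hl0']].
  specialize (H l0 Hl0). rewrite twice_sub_delta_entry in H.
  destruct (Nat.eqb_spec l0 i); [subst; lia|]. destruct (Nat.eqb l0 i'); lia. }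
assert (Hneg : has_neg d (zsub (twice n) (zdelta i)) = true).
{ apply has_neg_true. exists i. split; auto. rewrite twice_sub_delta_entry, Nat.eqb_refl, Hn. lia. }
destruct (Z.to_nat (zsize d (zsub (twice n) (zdelta i)) + 1)); cbn [X_f]; rewrite Hm, Hneg;
  reflexivity.
Qed.

Variables a b : R.
Hypothesis Hab : (a < b)%R.
Hypothesis H0 : (a <= x0 <= b)%R.
Hypothesis Hp : cont_on a b p.
Hypothesis Hu0 : cont_on a b u0.
Hypothesis Hr : forall i, (i < d)%nat -> cont_on a b (r i).
Hypothesis Hp0 : forall x, (a <= x <= b)%R -> p x <> 0.
Hypothesis Hu00 : forall x, (a <= x <= b)%R -> u0 x <> 0.

Lemma cont_on_weight : cont_on a b (fun s => / (p s * u0 s * u0 s)).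
Proof.
apply cont_on_inv. apply cont_on_mult. apply cont_on_mult; auto. auto.
intros x Hx. apply Cmult_neq_0. apply Cmult_neq_0; auto. auto.
Qed.

Lemma cont_on_Xt_f k j : cont_on a b (Xt_f d x0 p u0 r k j).
Proof.
revert j. induction k; intros j; cbn [Xt_f].
- destruct (has_neg d j); [apply cont_on_const|]. destruct (all_zero d j); apply cont_on_const.
- destruct (has_neg d j); [apply cont_on_const|]. destruct (all_zero d j); [apply cont_on_const|].
  destruct (odd_entries d j) as [|i [|i' l]] eqn:E.
  + apply cont_on_mult. apply cont_on_const. apply cont_on_cint; auto.
    apply cont_on_mult. apply cont_on_weight.
      apply (cont_on_csum a b (fun i => Xt_f d x0 p u0 r k (zsub j (zdelta i)))).
    intros; apply IHk.
  + assert (Hi : (i < d)%nat) by (apply (odd_entries_in d j); rewrite E; left; auto).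
    apply cont_on_mult. apply cont_on_const. apply cont_on_cint; auto.
    apply cont_on_mult. apply cont_on_mult. apply cont_on_mult; auto. auto. apply IHk.
  + apply cont_on_const.
Qed.

Lemma cont_on_X_f k j : cont_on a b (X_f d x0 p u0 r k j).
Proof.
revert j. induction k; intros j; cbn [X_f].
- destruct (is_minus_delta d j); [apply cont_on_const|].
  destruct (has_neg d j); apply cont_on_const.
- destruct (is_minus_delta d j); [apply cont_on_const|].
  destruct (has_neg d j); [apply cont_on_const|].
  destruct (odd_entries d j) as [|i [|i' l]] eqn:E.
  + apply cont_on_mult. apply cont_on_const. apply cont_on_cint; auto.
    apply cont_on_mult. apply cont_on_weight.
      apply (cont_on_csum a b (fun i => X_f d x0 p u0 r k (zsub j (zdelta i)))).
    intros; apply IHk.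
  + assert (Hi : (i < d)%nat) by (apply (odd_entries_in d j); rewrite E; left; auto).
    apply cont_on_mult. apply cont_on_const. apply cont_on_cint; auto.
    apply cont_on_mult. apply cont_on_mult. apply cont_on_mult; auto. auto. apply IHk.
  + apply cont_on_const.
Qed.

Lemma cont_on_Xt j : cont_on a b (Xt j).
Proof. apply cont_on_Xt_f. Qed.
Lemma cont_on_X j : cont_on a b (X j).
Proof. apply cont_on_X_f. Qed.

End FormalPowerEquations.

(** * The series and their integral equations *)

Section SeriesIdentities.
Variables (d : nat) (x0 : R) (p u0 : R -> C) (r : nat -> R -> C) (lam : nat -> C).
Variables a b : R.
Hypothesis Hd : (1 <= d)%nat.
Hypothesis Hab : (a < b)%R.
Hypothesis H0 : (a <= x0 <= b)%R.
Hypothesis Hp : cont_on a b p.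
Hypothesis Hu0 : cont_on a b u0.
Hypothesis Hr : forall i, (i < d)%nat -> cont_on a b (r i).
Hypothesis Hp0 : forall x, (a <= x <= b)%R -> p x <> 0.
Hypothesis Hu00 : forall x, (a <= x <= b)%R -> u0 x <> 0.

Notation Xt := (Xt d x0 p u0 r).
Notation X := (X d x0 p u0 r).
Notation I x := (a <= x <= b)%R.

Definition term1 (n : nat -> nat) (x : R) : C :=
  Xt (twice n) x * mpow d lam n / cfact (2 * nsize d n).
Definition dterm1 (n : nat -> nat) (x : R) : C :=
  if Nat.eqb (nsize d n) 0 then 0 else
  csum (fun i => Xt (zsub (twice n) (zdelta i)) x) d * mpow d lam n / cfact (2 * nsize d n - 1).
Definition term2 (n : nat -> nat) (x : R) : C :=
  X (twice n) x * mpow d lam n / cfact (2 * nsize d n + 1).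
Definition dterm2 (n : nat -> nat) (x : R) : C :=
  csum (fun i => X (zsub (twice n) (zdelta i)) x) d * mpow d lam n / cfact (2 * nsize d n).

(* With [u = u0 W] and [V = p u0^2 W'], the equation for [u] reads
   [W' = coefA V], [V' = coefB W]. *)
Definition coefA (s : R) : C := / (p s * u0 s * u0 s).
Definition rho_lam (s : R) : C := csum (fun i => lam i * r i s) d.
Definition coefB (s : R) : C := u0 s * u0 s * rho_lam s.

(* The coefficient of index [n] in [coefB * sum_m T m]: the term [lam_i r_i] lowers [n_i] by one. *)
Definition coefB_shift (T : (nat -> nat) -> R -> C) (n : nat -> nat) (s : R) : C :=
  csum (fun i => if Nat.leb 1 (n i) then lam i * r i s * u0 s * u0 s * T (decr i n) s else 0) d.

Lemma cont_on_coefA : cont_on a b coefA.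
Proof. apply (cont_on_weight p u0 a b); auto. Qed.

Lemma cont_on_coefB : cont_on a b coefB.
Proof.
apply cont_on_mult; [apply cont_on_mult; auto|].
apply (cont_on_csum a b (fun i s => lam i * r i s)). intros.
apply cont_on_mult; auto. apply cont_on_const.
Qed.

Lemma cont_on_Xt_sum n : cont_on a b (fun x => csum (fun i => Xt (zsub (twice n) (zdelta i)) x) d).
Proof. apply (cont_on_csum a b (fun i => Xt _)). intros.
  apply (cont_on_Xt d x0 p u0 r a b); auto. Qed.

Lemma cont_on_X_sum n : cont_on a b (fun x => csum (fun i => X (zsub (twice n) (zdelta i)) x) d).
Proof. apply (cont_on_csum a b (fun i => X _)). intros. apply (cont_on_X d x0 p u0 r a b); auto.
  Qed.

Lemma cont_on_term1 n : cont_on a b (term1 n).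
Proof.
unfold term1, Cdiv. apply cont_on_mult; [apply cont_on_mult|]; try apply cont_on_const.
apply (cont_on_Xt d x0 p u0 r a b); auto.
Qed.

Lemma cont_on_term2 n : cont_on a b (term2 n).
Proof.
unfold term2, Cdiv. apply cont_on_mult; [apply cont_on_mult|]; try apply cont_on_const.
apply (cont_on_X d x0 p u0 r a b); auto.
Qed.

Lemma cont_on_dterm1 n : cont_on a b (dterm1 n).
Proof.
unfold dterm1, Cdiv. destruct (Nat.eqb (nsize d n) 0); [apply cont_on_const|].
apply cont_on_mult; [apply cont_on_mult|]; try apply cont_on_const. apply cont_on_Xt_sum.
Qed.

Lemma cont_on_dterm2 n : cont_on a b (dterm2 n).
Proof.
unfold dterm2, Cdiv. apply cont_on_mult; [apply cont_on_mult|]; try apply cont_on_const.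
apply cont_on_X_sum.
Qed.

Lemma cont_on_rcoef i (F : R -> C) : (i < d)%nat -> cont_on a b F ->
  cont_on a b (fun s => r i s * u0 s * u0 s * F s).
Proof.
intros Hi HF. apply cont_on_mult; auto.
apply cont_on_mult; auto. apply cont_on_mult; auto.
Qed.

Lemma cont_on_coefB_shift (T : (nat -> nat) -> R -> C) n : (forall m, cont_on a b (T m)) ->
  cont_on a b (coefB_shift T n).
Proof.
intros HT. apply (cont_on_csum a b (fun i s => if Nat.leb 1 (n i)
  then lam i * r i s * u0 s * u0 s * T (decr i n) s else 0)).
intros i Hi. destruct (Nat.leb 1 (n i)); [|apply cont_on_const].
apply cont_on_mult; [|apply HT]. apply cont_on_mult; auto. apply cont_on_mult; auto.
apply cont_on_mult; [apply cont_on_const | auto].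
Qed.

Lemma coefB_msum_le (T : (nat -> nat) -> R -> C) N s :
  coefB s * msum_le d N (fun n => T n s) = msum_le d (S N) (fun n => coefB_shift T n s).
Proof.
unfold coefB_shift. rewrite msum_le_csum.
rewrite (csum_ext _ (fun i => lam i * r i s * u0 s * u0 s * msum_le d N (fun n => T n s))).
- rewrite csum_mult_r. unfold coefB, rho_lam.
  rewrite <- (csum_mult_l (u0 s * u0 s) (fun i => lam i * r i s)).
  f_equal. apply csum_ext. intros; ring.
- intros i Hi. rewrite <- (msum_le_shift_decr d i N (fun n => T n s)) by auto.
  rewrite <- msum_le_mult_l. apply msum_le_ext. intros n. destruct (Nat.leb 1 (n i)); ring.
Qed.

Lemma cint_coefB_shift T n x : I x -> (forall m, cont_on a b (T m)) ->
  cint x0 (coefB_shift T n) x = csum (fun i => cint x0 (fun s => if Nat.leb 1 (n i)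
    then lam i * r i s * u0 s * u0 s * T (decr i n) s else 0) x) d.
Proof.
intros Hx HT. unfold coefB_shift.
rewrite (cint_csum a b Hab x0 (fun i s => if Nat.leb 1 (n i)
  then lam i * r i s * u0 s * u0 s * T (decr i n) s else 0)); auto.
intros i Hi. destruct (Nat.leb 1 (n i)); [|apply cont_on_const].
apply cont_on_mult; [|apply HT]. apply cont_on_mult; auto. apply cont_on_mult; auto.
apply cont_on_mult; [apply cont_on_const | auto].
Qed.

Lemma cint_lam_r_scaled i (G : R -> C) c (F : R -> C) x : I x -> (i < d)%nat -> cont_on a b F ->
  (forall s, I s -> G s = c * F s) ->
  cint x0 (fun s => lam i * r i s * u0 s * u0 s * G s) x
  = lam i * c * cint x0 (fun s => r i s * u0 s * u0 s * F s) x.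
Proof.
intros Hx Hi HF HG.
assert (HrF : cont_on a b (fun s => r i s * u0 s * u0 s * F s)) by (apply cont_on_rcoef; auto).
rewrite <- (cint_Cmult a b Hab) by auto.
apply (cint_ext a b); auto. intros s Hs. rewrite HG by auto. ring.
Qed.

Lemma term1_integral n x : I x ->
  term1 n x = (if Nat.eqb (nsize d n) 0 then 1 else 0) + cint x0 (fun s => coefA s * dterm1 n s) x.
Proof.
intros Hx. unfold term1. destruct (Nat.eqb_spec (nsize d n) 0) as [Hn|Hn].
- rewrite (cint_ext a b x0 _ (fun _ => 0)), cint_zero, Xt_twice_zero, mpow_zero, Hn by
    (auto; intros; unfold dterm1; rewrite Hn; simpl; ring).
  rewrite Nat.mul_0_r, cfact_0. field.
- rewrite Xt_twice by auto.
  rewrite (cint_ext a b x0 (fun s => coefA s * dterm1 n s) (fun s => mpow d lam n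
      / cfact (2 * nsize d n - 1) * (coefA s
        * csum (fun i => Xt (zsub (twice n) (zdelta i)) s) d)));
    [| auto | auto | intros; unfold dterm1; apply Nat.eqb_neq in Hn; rewrite Hn; unfold Cdiv; ring].
  rewrite (cint_Cmult a b Hab); auto; [|apply cont_on_mult;
    [apply cont_on_coefA | apply cont_on_Xt_sum]].
  unfold Cdiv. rewrite (Cinv_cfact_pred (2 * Z.of_nat (nsize d n)) (2 * nsize d n) (2
    * nsize d n - 1)) by lia.
  unfold coefA, Cdiv. ring.
Qed.

Lemma partial_sum1_integral N x : I x ->
  msum_le d N (fun n => term1 n x)
  = 1 + cint x0 (fun s => coefA s * msum_le d N (fun n => dterm1 n s)) x.
Proof.
intros Hx.
rewrite (msum_le_ext d N _ (fun n => (if Nat.eqb (nsize d n) 0 then 1 else 0)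
  + cint x0 (fun s => coefA s * dterm1 n s) x)) by (intros n; apply term1_integral; auto).
rewrite msum_le_plus, msum_le_only0, nsize_const0
  by (intros n Hn; apply Nat.eqb_neq in Hn; rewrite Hn; reflexivity).
rewrite <- (cint_msum_le a b Hab); auto.
- f_equal. apply (cint_ext a b); auto. intros s Hs. rewrite <- msum_le_mult_l. reflexivity.
- intros n. apply cont_on_mult; [apply cont_on_coefA | apply cont_on_dterm1].
Qed.

Lemma dterm1_integral n x : I x -> dterm1 n x = cint x0 (coefB_shift term1 n) x.
Proof.
intros Hx. unfold dterm1. destruct (Nat.eqb_spec (nsize d n) 0) as [Hn|Hn].
- rewrite (cint_ext a b x0 _ (fun _ => 0)), cint_zero; auto.
  intros s Hs. unfold coefB_shift. rewrite (csum_ext _ (fun _ => 0)); [apply csum_zero|].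
  intros i Hi. rewrite (nsize_eq0 d n Hn i Hi). reflexivity.
- rewrite cint_coefB_shift by (auto; apply cont_on_term1).
  unfold Cdiv. rewrite <- Cmult_assoc, <- csum_mult_r. apply csum_ext. intros i Hi.
  destruct (Nat.leb_spec 1 (n i)) as [Hni|Hni].
  + assert (Hge := nsize_ge d n i Hi).
    rewrite Xt_twice_sub_delta, (cint_lam_r_scaled i (term1 (decr i n))
      (mpow d lam (decr i n) / cfact (2 * (nsize d n - 1))) (Xt (twice (decr i n)))); auto.
    2:{ apply (cont_on_Xt d x0 p u0 r a b); auto. }
    2:{ intros. unfold term1. rewrite nsize_decr by auto. unfold Cdiv. ring. }
    rewrite (mpow_decr d lam n i) by auto.
    unfold Cdiv. rewrite (Cinv_cfact_pred (2 * Z.of_nat (nsize d n) - 1) (2 * nsize d n - 1) (2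
      * (nsize d n - 1))) by lia.
    unfold Cdiv. ring.
  + replace (n i) with 0%nat by lia.
    rewrite Xt_twice_sub_delta_zero, cint_zero by (auto; lia). ring.
Qed.

Lemma dpartial_sum1_integral N x : I x ->
  msum_le d (S N) (fun n => dterm1 n x)
  = 0 + cint x0 (fun s => coefB s * msum_le d N (fun n => term1 n s)) x.
Proof.
intros Hx. rewrite Cplus_0_l.
rewrite (cint_ext a b x0 _ (fun s => msum_le d (S N) (fun n => coefB_shift term1 n s)))
  by (auto; intros; apply coefB_msum_le).
rewrite (cint_msum_le a b Hab) by (auto; intros; apply cont_on_coefB_shift, cont_on_term1).
apply msum_le_ext. intros n. apply dterm1_integral; auto.
Qed.

Lemma partial_sum2_integral N x : I x ->
  msum_le d N (fun n => term2 n x)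
  = 0 + cint x0 (fun s => coefA s * msum_le d N (fun n => dterm2 n s)) x.
Proof.
intros Hx. rewrite Cplus_0_l.
rewrite (cint_ext a b x0 _ (fun s => msum_le d N (fun n => coefA s * dterm2 n s)))
  by (auto; intros; rewrite msum_le_mult_l; reflexivity).
rewrite (cint_msum_le a b Hab); auto.
2:{ intros. apply cont_on_mult; [apply cont_on_coefA | apply cont_on_dterm2]. }
apply msum_le_ext. intros n. unfold term2. rewrite X_twice.
rewrite (cint_ext a b x0 (fun s => coefA s * dterm2 n s) (fun s => mpow d lam n
    / cfact (2 * nsize d n) * (coefA s * csum (fun i => X (zsub (twice n) (zdelta i)) s) d)))
  by (auto; intros; unfold dterm2, Cdiv; ring).
rewrite (cint_Cmult a b Hab); auto; [|apply cont_on_mult;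
  [apply cont_on_coefA | apply cont_on_X_sum]].
unfold Cdiv. rewrite (Cinv_cfact_pred (2 * Z.of_nat (nsize d n) + 1) (2 * nsize d n + 1) (2
  * nsize d n)) by lia.
unfold coefA, Cdiv. ring.
Qed.

Lemma dterm2_integral n x : I x ->
  dterm2 n x = (if Nat.eqb (nsize d n) 0 then 1 else 0) + cint x0 (coefB_shift term2 n) x.
Proof.
intros Hx. unfold dterm2. destruct (Nat.eqb_spec (nsize d n) 0) as [Hn|Hn].
- rewrite (cint_ext a b x0 _ (fun _ => 0)), cint_zero; auto.
  + rewrite (csum_ext _ (fun _ => / RtoC (INR d))) by (intros; rewrite X_minus_delta by auto;
    reflexivity).
    rewrite csum_const, mpow_zero, Hn by auto. rewrite Nat.mul_0_r, cfact_0.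
    assert (HdC : RtoC (INR d) <> 0) by (apply RtoC_neq_0, not_0_INR; lia). field. auto.
  + intros s Hs. unfold coefB_shift. rewrite (csum_ext _ (fun _ => 0)); [apply csum_zero|].
    intros i Hi. rewrite (nsize_eq0 d n Hn i Hi). reflexivity.
- rewrite cint_coefB_shift, Cplus_0_l by (auto; apply cont_on_term2).
  unfold Cdiv. rewrite <- Cmult_assoc, <- csum_mult_r. apply csum_ext. intros i Hi.
  destruct (Nat.leb_spec 1 (n i)) as [Hni|Hni].
  + assert (Hge := nsize_ge d n i Hi).
    rewrite X_twice_sub_delta, (cint_lam_r_scaled i (term2 (decr i n))
      (mpow d lam (decr i n) / cfact (2 * (nsize d n - 1) + 1)) (X (twice (decr i n)))); auto.
    2:{ apply (cont_on_X d x0 p u0 r a b); auto. }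
    2:{ intros. unfold term2. rewrite nsize_decr by auto. unfold Cdiv. ring. }
    rewrite (mpow_decr d lam n i) by auto.
    unfold Cdiv. rewrite (Cinv_cfact_pred (2 * Z.of_nat (nsize d n)) (2 * nsize d n) (2
      * (nsize d n - 1) + 1)) by lia.
    unfold Cdiv. ring.
  + replace (n i) with 0%nat by lia.
    rewrite X_twice_sub_delta_zero, cint_zero by (auto; lia). ring.
Qed.

Lemma dpartial_sum2_integral N x : I x ->
  msum_le d (S N) (fun n => dterm2 n x)
  = 1 + cint x0 (fun s => coefB s * msum_le d N (fun n => term2 n s)) x.
Proof.
intros Hx.
rewrite (cint_ext a b x0 _ (fun s => msum_le d (S N) (fun n => coefB_shift term2 n s)))
  by (auto; intros; apply coefB_msum_le).
rewrite (cint_msum_le a b Hab) by (auto; intros; apply cont_on_coefB_shift, cont_on_term2).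
rewrite (msum_le_ext d (S N) _ (fun n => (if Nat.eqb (nsize d n) 0 then 1 else 0)
  + cint x0 (coefB_shift term2 n) x)) by (intros n; apply dterm2_integral; auto).
rewrite msum_le_plus, msum_le_only0, nsize_const0
  by (intros n Hn; apply Nat.eqb_neq in Hn; rewrite Hn; reflexivity).
reflexivity.
Qed.

Lemma series_solution1 : exists W V,
  unif_cv_on a b (fun N x => msum_le d N (fun n => term1 n x)) W /\
  unif_cv_on a b (fun N x => msum_le d N (fun n => dterm1 n x)) V /\
  has_deriv_on a b W (fun x => coefA x * V x) /\ has_deriv_on a b V (fun x => coefB x * W x) /\
  W x0 = 1 /\ V x0 = 0.
Proof.
apply (coupled_picard a b Hab x0 coefA coefB 1 0); auto.
- apply cont_on_coefA.
- apply cont_on_coefB.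
- intros N. apply cont_on_msum_le; auto. intros; apply cont_on_term1.
- intros N. apply cont_on_msum_le; auto. intros; apply cont_on_dterm1.
- intros N x Hx. apply partial_sum1_integral; auto.
- intros N x Hx. apply dpartial_sum1_integral; auto.
Qed.

Lemma series_solution2 : exists W V,
  unif_cv_on a b (fun N x => msum_le d N (fun n => term2 n x)) W /\
  unif_cv_on a b (fun N x => msum_le d N (fun n => dterm2 n x)) V /\
  has_deriv_on a b W (fun x => coefA x * V x) /\ has_deriv_on a b V (fun x => coefB x * W x) /\
  W x0 = 0 /\ V x0 = 1.
Proof.
apply (coupled_picard a b Hab x0 coefA coefB 0 1); auto.
- apply cont_on_coefA.
- apply cont_on_coefB.
- intros N. apply cont_on_msum_le; auto. intros; apply cont_on_term2.
- intros N. apply cont_on_msum_le; auto. intros; apply cont_on_dterm2.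
- intros N x Hx. apply partial_sum2_integral; auto.
- intros N x Hx. apply dpartial_sum2_integral; auto.
Qed.

End SeriesIdentities.

Section SecondOrder.
Variables a b : R.
Hypothesis Hab : (a < b)%R.
Notation I x := (a <= x <= b)%R.

Variables (p q u0 du0 rho : R -> C).
Hypothesis Hp0 : forall x, I x -> p x <> 0.
Hypothesis Hu00 : forall x, I x -> u0 x <> 0.
Hypothesis Hdu0 : has_deriv_on a b u0 du0.
Hypothesis Hpdu0 : has_deriv_on a b (fun x => p x * du0 x) (fun x => - (q x * u0 x)).

Lemma solution_of_first_order_system (W V : R -> C) :
  has_deriv_on a b W (fun x => / (p x * u0 x * u0 x) * V x) ->
  has_deriv_on a b V (fun x => u0 x * u0 x * rho x * W x) ->
  let u := fun x => u0 x * W x in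
  let du := fun x => du0 x / u0 x * u x + / (p x * u0 x) * V x in
  has_deriv_on a b u du /\
  has_deriv_on a b (fun x => p x * du x) (fun x => rho x * u x - q x * u x).
Proof.
intros HW HV u du. split.
- apply (has_deriv_on_ext a b u u
    (fun x => du0 x * W x + u0 x * (/ (p x * u0 x * u0 x) * V x))); auto.
  + intros x Hx. unfold du, u. field. split; auto.
  + apply has_deriv_on_mult; auto.
- apply (has_deriv_on_ext a b (fun x => p x * du0 x * W x + V x * / u0 x) (fun x => p x * du x)
    (fun x => (- (q x * u0 x)) * W x + p x * du0 x * (/ (p x * u0 x * u0 x) * V x)
      + (u0 x * u0 x * rho x * W x * / u0 x + V x * (- du0 x * / (u0 x * u0 x))))).
  + intros x Hx. unfold du, u. field. split; auto.
  + intros x Hx. unfold u. field. split; auto.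
  + apply has_deriv_on_plus; [apply (has_deriv_on_mult a b (fun x => p x * du0 x) W); auto|].
    apply has_deriv_on_mult; auto. apply has_deriv_on_inv; auto.
Qed.

(* [W1 x0 = 1] and [W2 x0 = 0] kill the first coefficient; then [W2] vanishes
   identically although its derivative at x0 is [V2 x0 / (p u0^2)(x0) <> 0]. *)
Lemma solutions_independent x0 (W1 W2 V2 : R -> C) : I x0 ->
  has_deriv_on a b W2 (fun x => / (p x * u0 x * u0 x) * V2 x) ->
  W1 x0 = 1 -> W2 x0 = 0 -> V2 x0 = 1 ->
  forall al be : C, (forall x, I x -> al * (u0 x * W1 x) + be * (u0 x * W2 x) = 0) ->
  al = 0 /\ be = 0.
Proof.
intros H0 HW2 HW10 HW20 HV20 al be Hlin.
assert (Ha : al = 0).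
{ assert (E0 := Hlin x0 H0). rewrite HW10, HW20 in E0.
  replace al with ((al * (u0 x0 * 1) + be * (u0 x0 * 0)) / u0 x0) by (field; auto).
  rewrite E0. field. auto. }
split; auto.
assert (Hb : forall x, I x -> be * W2 x = 0).
{ intros x Hx. specialize (Hlin x Hx). rewrite Ha in Hlin.
  replace (be * W2 x) with ((0 * (u0 x * W1 x) + be * (u0 x * W2 x)) / u0 x) by (field; auto).
  rewrite Hlin. field. auto. }
assert (D1 : has_deriv_on a b (fun x => be * W2 x)
    (fun x => 0 * W2 x + be * (/ (p x * u0 x * u0 x) * V2 x)))
  by (apply (has_deriv_on_mult a b (fun _ => be) W2); auto; apply has_deriv_on_const).
assert (D2 : has_deriv_on a b (fun x => be * W2 x) (fun _ => 0)).
{ apply (has_deriv_on_ext a b (fun _ => 0) _ (fun _ => 0)); auto;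
    [intros; symmetry; auto | apply has_deriv_on_const]. }
assert (U := has_deriv_on_unique a b _ _ _ x0 Hab H0 D1 D2). simpl in U.
rewrite HV20 in U.
assert (Hz : p x0 * u0 x0 * u0 x0 <> 0) by (apply Cmult_neq_0; auto; apply Cmult_neq_0; auto).
replace be with ((0 * W2 x0 + be * (/ (p x0 * u0 x0 * u0 x0) * 1)) * (p x0 * u0 x0 * u0 x0))
  by (field; auto).
rewrite U. ring.
Qed.

End SecondOrder.

Theorem mainTheorem1
  (d : nat) (x1 x2 x0 : R) (p dp q : R -> C) (r : nat -> R -> C)
  (u0 du0 : R -> C) :
  (1 <= d)%nat -> (x1 < x2)%R -> (x1 <= x0 <= x2)%R ->
  cont_on x1 x2 p -> cont_on x1 x2 q ->
  (forall i, (i < d)%nat -> cont_on x1 x2 (r i)) ->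
  has_deriv_on x1 x2 p dp -> cont_on x1 x2 dp ->
  (forall x, (x1 <= x <= x2)%R -> p x <> 0) ->
  (* u0 is a nonvanishing solution of (p u0')' + q u0 = 0, u0' = du0 *)
  has_deriv_on x1 x2 u0 du0 ->
  has_deriv_on x1 x2 (fun x => p x * du0 x) (fun x => - (q x * u0 x)) ->
  (forall x, (x1 <= x <= x2)%R -> u0 x <> 0) ->
  forall lam : nat -> C,
  let Xt := Xt d x0 p u0 r in
  let X := X d x0 p u0 r in
  (* partial sums over the multi-indices n with |n| <= N *)
  let S1 := fun N x => msum_le d N (fun n =>
              Xt (twice n) x * mpow d lam n / cfact (2 * nsize d n)) in
  let S2 := fun N x => msum_le d N (fun n =>
              X (twice n) x * mpow d lam n / cfact (2 * nsize d n + 1)) in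
  let SD1 := fun N x => msum_le d N (fun n =>
              if Nat.eqb (nsize d n) 0 then 0 else
              csum (fun i => Xt (zsub (twice n) (zdelta i)) x) d * mpow d lam n
                / cfact (2 * nsize d n - 1)) in
  let SD2 := fun N x => msum_le d N (fun n =>
              csum (fun i => X (zsub (twice n) (zdelta i)) x) d * mpow d lam n
                / cfact (2 * nsize d n)) in
  let rho := fun x => csum (fun i => lam i * r i x) d in
  exists W1 W2 V1 V2 : R -> C,
    unif_cv_on x1 x2 S1 W1 /\ unif_cv_on x1 x2 S2 W2 /\
    unif_cv_on x1 x2 SD1 V1 /\ unif_cv_on x1 x2 SD2 V2 /\
    let u1 := fun x => u0 x * W1 x in
    let u2 := fun x => u0 x * W2 x in
    let du1 := fun x => du0 x / u0 x * u1 x + / (p x * u0 x) * V1 x in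
    let du2 := fun x => du0 x / u0 x * u2 x + / (p x * u0 x) * V2 x in
    (* u1, u2 solve (p y')' + q y = (lam_1 r_1 + ... + lam_d r_d) y *)
    has_deriv_on x1 x2 u1 du1 /\
    has_deriv_on x1 x2 (fun x => p x * du1 x) (fun x => rho x * u1 x - q x * u1 x) /\
    has_deriv_on x1 x2 u2 du2 /\
    has_deriv_on x1 x2 (fun x => p x * du2 x) (fun x => rho x * u2 x - q x * u2 x) /\
    (* linear independence on [x1,x2] *)
    (forall a b : C, (forall x, (x1 <= x <= x2)%R -> a * u1 x + b * u2 x = 0) ->
       a = 0 /\ b = 0) /\
    (* initial values *)
    u1 x0 = u0 x0 /\ du1 x0 = du0 x0 /\
    u2 x0 = 0 /\ du2 x0 = / (p x0 * u0 x0).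
Proof.
intros Hd Hab H0 Hp Hq Hr Hdp Hdpc Hp0 Hdu0 Hpdu0 Hu00 lam Xt' X' S1 S2 SD1 SD2 rho.
assert (Hu0 : cont_on x1 x2 u0) by (apply (has_deriv_on_cont x1 x2 u0 du0); auto).
destruct (series_solution1 d x0 p u0 r lam x1 x2)
  as [W1 [V1 [HS1 [HSD1 [HW1 [HV1 [HW10 HV10]]]]]]]; auto.
destruct (series_solution2 d x0 p u0 r lam x1 x2)
  as [W2 [V2 [HS2 [HSD2 [HW2 [HV2 [HW20 HV20]]]]]]]; auto.
exists W1, W2, V1, V2. do 4 (split; [assumption|]).
intros u1 u2 du1 du2.
destruct (solution_of_first_order_system x1 x2 p q u0 du0 rho Hp0 Hu00 Hdu0 Hpdu0 W1 V1 HW1 HV1)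
  as [Hu1 Hpu1].
destruct (solution_of_first_order_system x1 x2 p q u0 du0 rho Hp0 Hu00 Hdu0 Hpdu0 W2 V2 HW2 HV2)
  as [Hu2 Hpu2].
assert (Hpu00 : p x0 * u0 x0 <> 0) by (apply Cmult_neq_0; auto).
do 4 (split; [assumption|]).
split; [apply (solutions_independent x1 x2 Hab p u0 Hp0 Hu00 x0 W1 W2 V2); auto|].
unfold du1, u1, du2, u2. rewrite HW10, HV10, HW20, HV20.
repeat split; [ring | field; auto | ring | field; auto].
Qed.
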